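(* For parameters $(x_1,x_2,\xi_1,\xi_2)\in\mathbb{R}^{4n}$ consider the first-order differential operator on $L^2(\mathbb{R}_t)$ $$\tilde P=iD_t+a(t,\xi_2,\xi_1+t\xi_2)F(x_2-tx_1).$$ There exists a constant $C>0$ such that for all $u\in\mathscr S(\mathbb{R}_t)$ and all $(x_1,x_2,\xi_1,\xi_2)\in\mathbb{R}^{4n}$, $$\big\|(1+\langle x_1\rangle^{\frac{2\sigma}{2\sigma+1}}+\langle x_2-tx_1\rangle^{2\sigma})u\big\|_{L^2(\mathbb{R}_t)}\le C\big(\|\tilde Pu\|_{L^2(\mathbb{R}_t)}+\|u\|_{L^2(\mathbb{R}_t)}\big).$$
   Context: $0<\sigma<1$, $n\ge1$. $a\in C_b^\infty(\mathbb{R}^{2n+1})$ (smooth, all derivatives bounded) with $a(t,\xi,\eta)\ge a_0>0$ for all $(t,\xi,\eta)\in\mathbb{R}\times\mathbb{R}^n\times\mathbb{R}^n$. $w\in C^\infty(\mathbb{R}^n)$ with $0\le w\le1$, $w=1$ on $\{|\eta|\ge2\}$, $w=0$ on $\{|\eta|\le1\}$, and $F(x)=|x|^{2\sigma}w(x)+|x|^2(1-w(x))$. $D_t=(2\pi i)^{-1}\partial_t$, $\langle x\rangle=(1+|x|^2)^{1/2}$. In the estimate, $\langle x_2-tx_1\rangle^{2\sigma}$ acts as multiplication by a function of $t$. *)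

From Stdlib Require Import Reals Lra List.
From Stdlib Require Fin.
Open Scope R_scope.

Definition vec (n : nat) := Fin.t n -> R.

Fixpoint fsum (n : nat) : (Fin.t n -> R) -> R :=
  match n return (Fin.t n -> R) -> R with
  | O => fun _ => 0
  | S m => fun f => f Fin.F1 + fsum m (fun i => f (Fin.FS i))
  end.

Definition vnorm {n} (x : vec n) : R := sqrt (fsum n (fun i => x i ^ 2)).
Definition vadd {n} (x y : vec n) : vec n := fun i => x i + y i.
Definition vscal {n} (c : R) (x : vec n) : vec n := fun i => c * x i.
Definition vsub {n} (x y : vec n) : vec n := fun i => x i - y i.
Definition vshift {n} (x : vec n) (i : Fin.t n) (s : R) : vec n :=
  fun j => if Fin.eq_dec i j then x j + s else x j.

Definition jbr {n} (x : vec n) : R := sqrt (1 + vnorm x ^ 2).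

Definition rpow (r y : R) : R := if Rle_dec r 0 then 0 else Rpower r y.

(** Existence of all iterated partial derivatives along directions Dir:
    D l is the iterated partial derivative in the directions of l
    (the head of the list being the last derivative applied). *)
Definition partial_family {X Dir : Type} (move : X -> Dir -> R -> X)
  (f : X -> R) (D : list Dir -> X -> R) : Prop :=
  (forall x, D nil x = f x) /\
  (forall l d x, derivable_pt_lim (fun s => D l (move x d s)) 0 (D (d :: l) x)).

Definition move3 {n} (p : R * vec n * vec n) (d : option (Fin.t n + Fin.t n)) (s : R)
  : R * vec n * vec n :=
  match p with
  | (t, xi, eta) =>
    match d with
    | None => (t + s, xi, eta)
    | Some (inl i) => (t, vshift xi i s, eta)
    | Some (inr i) => (t, xi, vshift eta i s)
    end
  end.

Definition Cb_inf3 {n} (a : R -> vec n -> vec n -> R) : Prop :=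
  exists D, partial_family (@move3 n) (fun p => match p with (t, xi, eta) => a t xi eta end) D
    /\ forall l, exists M, forall p, Rabs (D l p) <= M.

Definition continuous_vec {n} (g : vec n -> R) : Prop :=
  forall x eps, 0 < eps -> exists delta, 0 < delta /\
    forall y, (forall i, Rabs (y i - x i) < delta) -> Rabs (g y - g x) < eps.

Definition smooth_vec {n} (w : vec n -> R) : Prop :=
  exists D, partial_family (@vshift n) w D /\ forall l, continuous_vec (D l).

Definition schwartz (u : R -> R) : Prop :=
  exists D : nat -> R -> R, (forall t, D O t = u t) /\
    (forall k t, derivable_pt_lim (D k) t (D (S k) t)) /\
    (forall k m, exists C, forall t, Rabs t ^ m * Rabs (D k t) <= C).

Definition Ffun {n} (sigma : R) (w : vec n -> R) (x : vec n) : R :=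
  rpow (vnorm x) (2 * sigma) * w x + vnorm x ^ 2 * (1 - w x).

Definition mult {n} (sigma : R) (a : R -> vec n -> vec n -> R) (w : vec n -> R)
  (x1 x2 xi1 xi2 : vec n) (t : R) : R :=
  a t xi2 (vadd xi1 (vscal t xi2)) * Ffun sigma w (vsub x2 (vscal t x1)).

Definition weight {n} (sigma : R) (x1 x2 : vec n) (t : R) : R :=
  1 + Rpower (jbr x1) (2 * sigma / (2 * sigma + 1))
    + Rpower (jbr (vsub x2 (vscal t x1))) (2 * sigma).

Definition int_on (g : R -> R) (a b I : R) : Prop :=
  exists pr : Riemann_integrable g a b, RiemannInt pr = I.

(** For a nonnegative integrand g: integral of g over R equals I
    (as the supremum of the integrals over [-N, N]). *)
Definition int_R (g : R -> R) (I : R) : Prop :=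
  is_lub (fun y => exists N, 0 <= N /\ int_on g (- N) N y) I.

From Stdlib Require Import Reals Lra Lia Psatz ClassicalEpsilon FunctionalExtensionality List.
From Stdlib Require Fin.
Open Scope R_scope.

(* Write [u = ur + i ui], [P~ u = u' / (2 pi) + m u] with [m >= a0 F(x2 - t x1)],
   [k = |x1|] and [q t = |x2 - t x1|^2], a quadratic in [t] with minimum at [t0].
   For real [g], integrating [Re (P~ u * g conj u)] over [[-N, N]] by parts and using
   AM-GM gives
     ∫ m g |u|^2 - (1 / 4 pi) ∫ g' |u|^2 <= (d ||P~ u||^2 + ||g u||^2 / d) / 2 + boundary.
   Three multipliers do the work.  [g = 1] bounds [∫ m |u|^2].  [g = - atan (mu (t - t0))]
   with [mu = k^(2 sigma / (2 sigma + 1))] has [g' = - psi], and [2 psi + m / a0 >= mu]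
   everywhere ([psi] near [t0], [m] away from it), giving
   [mu^2 ||u||^2 <~ ||P~ u||^2 + boundary].  [g = (B + q)^sigma] with
   [B ~ k^(2 / (2 sigma + 1))] has [|g'| <= a0 / 4 (B + q)^(2 sigma)] and
   [m g >~ (B + q)^(2 sigma)] where [q >= B], giving
   [∫ (B + q)^(2 sigma) |u|^2 <~ ||P~ u||^2 + B^(2 sigma) ||u||^2] with
   [B^(2 sigma) <~ 1 + mu^2].  Together these bound [∫ weight^2 |u|^2]; the boundary
   terms vanish as [N -> oo] since [u] is Schwartz and each [g] grows at most quadratically. *)

Ltac solve_continuity :=
  repeat first
    [ assumption
    | apply continuity_plus | apply continuity_minus | apply continuity_mult
    | apply continuity_opp
    | apply continuity_const; intros ? ?; reflexivity
    | apply derivable_continuous, derivable_id ].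

Lemma continuity_of_derivative f f' : (forall x, derivable_pt_lim f x (f' x)) -> continuity f.
Proof. intros H x. apply derivable_continuous_pt. exists (f' x). apply H. Qed.

(** The Riemann integral, made total: [RiemannInt] does not depend on the
    integrability proof ([RiemannInt_P5]), so we choose one by description. *)
Definition integral (f : R -> R) (a b : R) : R :=
  match excluded_middle_informative (exists pr : Riemann_integrable f a b, True) with
  | left h => RiemannInt (proj1_sig (constructive_indefinite_description _ h))
  | right _ => 0
  end.

Lemma integral_RiemannInt f a b (pr : Riemann_integrable f a b) : integral f a b = RiemannInt pr.
Proof.
  unfold integral. destruct excluded_middle_informative as [h|h].
  - apply RiemannInt_P5.
  - exfalso; apply h; exists pr; auto.
Qed.

Lemma continuity_integrable f a b : continuity f -> a <= b -> Riemann_integrable f a b.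
Proof. intros Hf Hab. apply continuity_implies_RiemannInt; auto. Qed.

Lemma integral_const c a b : integral (fun _ => c) a b = c * (b - a).
Proof. exact (eq_trans (integral_RiemannInt (fct_cte c) a b (RiemannInt_P14 a b c)) (RiemannInt_P15 _)). Qed.

Lemma integral_point f a : integral f a a = 0.
Proof. rewrite (integral_RiemannInt _ _ _ (RiemannInt_P7 f a)). apply RiemannInt_P9. Qed.

Section IntegralOnSegment.
Variables (a b : R).
Hypothesis hab : a <= b.

Lemma integral_lin f g l : continuity f -> continuity g ->
  integral (fun x => f x + l * g x) a b = integral f a b + l * integral g a b.
Proof.
  intros Hf Hg.
  pose proof (continuity_integrable f a b Hf hab) as prf.
  pose proof (continuity_integrable g a b Hg hab) as prg.
  pose proof (RiemannInt_P10 l prf prg) as pr.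
  rewrite (integral_RiemannInt _ _ _ pr), (RiemannInt_P13 prf prg pr).
  now rewrite <- !integral_RiemannInt.
Qed.

Lemma integral_plus f g : continuity f -> continuity g ->
  integral (fun x => f x + g x) a b = integral f a b + integral g a b.
Proof.
  intros Hf Hg. rewrite <- (Rmult_1_l (integral g a b)), <- integral_lin by auto.
  f_equal. apply functional_extensionality. intros; ring.
Qed.

Lemma integral_scal f l : continuity f -> integral (fun x => l * f x) a b = l * integral f a b.
Proof.
  intros Hf. rewrite <- (Rplus_0_l (l * integral f a b)).
  rewrite <- (Rmult_0_l (b - a)), <- integral_const, <- integral_lin by (solve_continuity).
  f_equal. apply functional_extensionality. intros; ring.
Qed.

Lemma integral_le f g : continuity f -> continuity g ->
  (forall x, a <= x <= b -> f x <= g x) -> integral f a b <= integral g a b.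
Proof.
  intros Hf Hg H.
  rewrite (integral_RiemannInt f a b (continuity_integrable f a b Hf hab)),
    (integral_RiemannInt g a b (continuity_integrable g a b Hg hab)).
  apply RiemannInt_P19; auto. intros; apply H; lra.
Qed.

Lemma integral_ge0 f : continuity f -> (forall x, a <= x <= b -> 0 <= f x) -> 0 <= integral f a b.
Proof.
  intros Hf H. rewrite <- (Rmult_0_l (b - a)), <- integral_const.
  apply integral_le; auto. solve_continuity.
Qed.

Lemma integral_FTC G g : (forall x, derivable_pt_lim G x (g x)) -> continuity g ->
  integral g a b = G b - G a.
Proof.
  intros HG Hg.
  destruct (Rle_lt_or_eq_dec a b hab) as [Hlt|<-]; [|rewrite integral_point; ring].
  set (C0 := fun x (_ : a <= x <= b) => Hg x).
  rewrite (integral_RiemannInt g a b (continuity_integrable g a b Hg hab)).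
  rewrite (RiemannInt_P20 hab (FTC_P1 hab C0) (continuity_integrable g a b Hg hab)).
  set (P := primitive hab (FTC_P1 hab C0)).
  assert (HP : forall x, a <= x <= b -> derivable_pt_lim P x (g x)) by
    (intros; apply RiemannInt_P28; auto).
  destruct (MVT_cor2 (fun x => G x - P x) (fun x => g x - g x) a b Hlt) as [c [Hc _]].
  { intros c Hc. apply derivable_pt_lim_minus; auto. }
  replace (g c - g c) with 0 in Hc by ring. lra.
Qed.

End IntegralOnSegment.

Lemma integral_chasles f a b c : continuity f -> a <= b -> b <= c ->
  integral f a b + integral f b c = integral f a c.
Proof.
  intros Hf H1 H2.
  rewrite (integral_RiemannInt f a b (continuity_integrable f a b Hf H1)),
    (integral_RiemannInt f b c (continuity_integrable f b c Hf H2)),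
    (integral_RiemannInt f a c (continuity_integrable f a c Hf (Rle_trans _ _ _ H1 H2))).
  apply RiemannInt_P26.
Qed.

Lemma integral_sym_mono f N N' : continuity f -> (forall x, 0 <= f x) -> 0 <= N -> N <= N' ->
  integral f (-N) N <= integral f (-N') N'.
Proof.
  intros Hf Hp H0 H1.
  rewrite <- (integral_chasles f (-N') (-N) N') by (auto; lra).
  rewrite <- (integral_chasles f (-N) N N') by (auto; lra).
  assert (0 <= integral f (-N') (-N)) by (apply integral_ge0; auto; lra).
  assert (0 <= integral f N N') by (apply integral_ge0; auto; lra).
  lra.
Qed.

Lemma derivable_pt_lim_add f g f' g' x : derivable_pt_lim f x f' -> derivable_pt_lim g x g' ->
  derivable_pt_lim (fun t => f t + g t) x (f' + g').
Proof. apply derivable_pt_lim_plus. Qed.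
Lemma derivable_pt_lim_sub f g f' g' x : derivable_pt_lim f x f' -> derivable_pt_lim g x g' ->
  derivable_pt_lim (fun t => f t - g t) x (f' - g').
Proof. apply derivable_pt_lim_minus. Qed.
Lemma derivable_pt_lim_mul f g f' g' x : derivable_pt_lim f x f' -> derivable_pt_lim g x g' ->
  derivable_pt_lim (fun t => f t * g t) x (f' * g x + f x * g').
Proof. apply derivable_pt_lim_mult. Qed.
Lemma derivable_pt_lim_compose f g f' g' x : derivable_pt_lim f x f' ->
  derivable_pt_lim g (f x) g' -> derivable_pt_lim (fun t => g (f t)) x (g' * f').
Proof. apply derivable_pt_lim_comp. Qed.
Lemma derivable_pt_lim_cmul c f f' x : derivable_pt_lim f x f' ->
  derivable_pt_lim (fun t => c * f t) x (c * f').
Proof.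
  intros H. replace (c * f') with (0 * f x + c * f') by ring.
  apply derivable_pt_lim_mul; auto. apply derivable_pt_lim_const.
Qed.
Lemma derivable_pt_lim_square f f' x : derivable_pt_lim f x f' ->
  derivable_pt_lim (fun t => f t ^ 2) x (2 * f x * f').
Proof.
  intros H. replace (2 * f x * f') with (f' * f x + f x * f') by ring.
  replace (fun t => f t ^ 2) with (fun t => f t * f t) by (apply functional_extensionality; intros; ring).
  apply derivable_pt_lim_mul; auto.
Qed.

(** * The multiplier identity *)

(** With [u = ur + i ui], [P~ u = u'/(2 pi) + m u]: these are [|u|^2] and [|P~ u|^2]. *)
Definition abs2 (ur ui : R -> R) (t : R) : R := ur t ^ 2 + ui t ^ 2.
Definition abs2_Pu (ur ui dur dui m : R -> R) (t : R) : R :=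
  (dur t / (2 * PI) + m t * ur t) ^ 2 + (dui t / (2 * PI) + m t * ui t) ^ 2.

Definition boundary (ur ui g : R -> R) (N : R) : R :=
  / (4 * PI) * Rabs (g N * abs2 ur ui N - g (-N) * abs2 ur ui (-N)).

Lemma abs2_ge0 ur ui t : 0 <= abs2 ur ui t.
Proof. unfold abs2. apply Rplus_le_le_0_compat; apply pow2_ge_0. Qed.

Lemma abs2_Pu_ge0 ur ui dur dui m t : 0 <= abs2_Pu ur ui dur dui m t.
Proof. unfold abs2_Pu. apply Rplus_le_le_0_compat; apply pow2_ge_0. Qed.

Lemma boundary_ge0 ur ui g N : 0 <= boundary ur ui g N.
Proof.
  unfold boundary. pose proof PI_RGT_0. pose proof (Rabs_pos (g N * abs2 ur ui N - g (-N) * abs2 ur ui (-N))).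
  apply Rmult_le_pos; auto. left; apply Rinv_0_lt_compat; lra.
Qed.

Lemma amgm A b d : 0 < d -> A * b <= (d * A ^ 2 + b ^ 2 / d) / 2.
Proof.
  intros Hd. assert (0 <= (d * A - b) ^ 2 / (2 * d)) by
    (unfold Rdiv; apply Rmult_le_pos; [apply pow2_ge_0 | left; apply Rinv_0_lt_compat; lra]).
  replace ((d * A ^ 2 + b ^ 2 / d) / 2) with (A * b + (d * A - b) ^ 2 / (2 * d)) by (field; lra).
  lra.
Qed.

(** The left-hand side is [Re (P~ u * g conj(u))]. *)
Lemma multiplier_amgm ur ui dur dui m g d t : 0 < d ->
  m t * g t * abs2 ur ui t + / (2 * PI) * (g t * (ur t * dur t + ui t * dui t))
  <= (d * abs2_Pu ur ui dur dui m t + g t ^ 2 * abs2 ur ui t / d) / 2.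
Proof.
  intros Hd. pose proof PI_RGT_0.
  pose proof (amgm (dur t / (2 * PI) + m t * ur t) (ur t * g t) d Hd).
  pose proof (amgm (dui t / (2 * PI) + m t * ui t) (ui t * g t) d Hd).
  unfold abs2, abs2_Pu.
  replace (m t * g t * (ur t ^ 2 + ui t ^ 2) + / (2 * PI) * (g t * (ur t * dur t + ui t * dui t)))
    with ((dur t / (2 * PI) + m t * ur t) * (ur t * g t) + (dui t / (2 * PI) + m t * ui t) * (ui t * g t))
    by (field; lra).
  replace ((d * ((dur t / (2 * PI) + m t * ur t) ^ 2 + (dui t / (2 * PI) + m t * ui t) ^ 2)
            + g t ^ 2 * (ur t ^ 2 + ui t ^ 2) / d) / 2)
    with ((d * (dur t / (2 * PI) + m t * ur t) ^ 2 + (ur t * g t) ^ 2 / d) / 2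
          + (d * (dui t / (2 * PI) + m t * ui t) ^ 2 + (ui t * g t) ^ 2 / d) / 2) by (field; lra).
  lra.
Qed.

Section Multiplier.
Variables (ur ui dur dui m : R -> R).
Hypotheses (Hr : forall t, derivable_pt_lim ur t (dur t))
  (Hi : forall t, derivable_pt_lim ui t (dui t))
  (Cdr : continuity dur) (Cdi : continuity dui) (Cm : continuity m).

Local Notation U := (abs2 ur ui).
Local Notation Phi := (abs2_Pu ur ui dur dui m).

Lemma continuity_abs2 : continuity U.
Proof.
  pose proof (continuity_of_derivative _ _ Hr). pose proof (continuity_of_derivative _ _ Hi).
  unfold abs2. solve_continuity.
Qed.

Lemma continuity_abs2_Pu : continuity Phi.
Proof.
  pose proof (continuity_of_derivative _ _ Hr). pose proof (continuity_of_derivative _ _ Hi).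
  unfold abs2_Pu, Rdiv. solve_continuity.
Qed.

Lemma derivable_pt_lim_mul_abs2 g g' t : derivable_pt_lim g t (g' t) ->
  derivable_pt_lim (fun t => g t * U t) t
    (g' t * U t + 2 * (g t * (ur t * dur t + ui t * dui t))).
Proof.
  intros Hg. unfold abs2.
  replace (g' t * (ur t ^ 2 + ui t ^ 2) + 2 * (g t * (ur t * dur t + ui t * dui t)))
    with (g' t * (ur t ^ 2 + ui t ^ 2) + g t * (2 * ur t * dur t + 2 * ui t * dui t)) by ring.
  apply (derivable_pt_lim_mul g (fun t => ur t ^ 2 + ui t ^ 2)); auto.
  apply (derivable_pt_lim_add (fun t => ur t ^ 2) (fun t => ui t ^ 2));
    apply derivable_pt_lim_square; auto.
Qed.

(** Integrating [multiplier_amgm] over [[-N, N]]; the cross term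
    [Re (g u' conj(u))] integrates by parts into [- ∫ g' |u|^2 / 2] plus a
    boundary term. *)
Lemma multiplier_estimate g g' N d :
  (forall t, derivable_pt_lim g t (g' t)) -> continuity g' -> 0 <= N -> 0 < d ->
  integral (fun t => m t * g t * U t) (-N) N - / (4 * PI) * integral (fun t => g' t * U t) (-N) N
  <= (d * integral Phi (-N) N + integral (fun t => g t ^ 2 * U t) (-N) N / d) / 2
     + boundary ur ui g N.
Proof.
  intros Hg Cg' HN Hd. pose proof PI_RGT_0.
  assert (HNN : -N <= N) by lra.
  pose proof (continuity_of_derivative _ _ Hg) as Cg.
  pose proof continuity_abs2 as CU. pose proof continuity_abs2_Pu as CPhi.
  pose proof (continuity_of_derivative _ _ Hr). pose proof (continuity_of_derivative _ _ Hi).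
  set (V' := fun t => g' t * U t + 2 * (g t * (ur t * dur t + ui t * dui t))).
  assert (CV' : continuity V') by (unfold V'; solve_continuity).
  assert (HFTC := integral_FTC (-N) N HNN _ V' (fun t => derivable_pt_lim_mul_abs2 g g' t (Hg t)) CV').
  assert (Hle : integral (fun t => (m t * g t * U t + (- / (4 * PI)) * (g' t * U t))
                                    + / (4 * PI) * V' t) (-N) N
             <= integral (fun t => d / 2 * Phi t + / (2 * d) * (g t ^ 2 * U t)) (-N) N).
  { apply integral_le; auto; try solve_continuity.
    intros t _. pose proof (multiplier_amgm ur ui dur dui m g d t Hd). unfold V'.
    replace (d / 2 * Phi t + / (2 * d) * (g t ^ 2 * U t))
      with ((d * Phi t + g t ^ 2 * U t / d) / 2) by (field; lra).
    replace (m t * g t * U t + - / (4 * PI) * (g' t * U t)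
             + / (4 * PI) * (g' t * U t + 2 * (g t * (ur t * dur t + ui t * dui t))))
      with (m t * g t * U t + / (2 * PI) * (g t * (ur t * dur t + ui t * dui t))) by (field; lra).
    auto. }
  rewrite !integral_lin, integral_scal, HFTC in Hle by (auto; solve_continuity).
  unfold boundary. set (jump := g N * U N - g (-N) * U (-N)) in *.
  assert (/ (4 * PI) * - jump <= / (4 * PI) * Rabs jump).
  { apply Rmult_le_compat_l; [left; apply Rinv_0_lt_compat; lra|].
    rewrite <- Rabs_Ropp. apply Rle_abs. }
  replace ((d * integral Phi (-N) N + integral (fun t => g t ^ 2 * U t) (-N) N / d) / 2)
    with (d / 2 * integral Phi (-N) N + / (2 * d) * integral (fun t => g t ^ 2 * U t) (-N) N)
    by (field; lra).
  lra.
Qed.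

End Multiplier.

Definition rapid_decay (u : R -> R) : Prop :=
  forall j : nat, exists C, forall t, Rabs t ^ j * Rabs (u t) <= C.

Lemma schwartz_rapid_decay u : schwartz u -> rapid_decay u.
Proof.
  intros [D [H0 [_ HB]]] j. destruct (HB 0%nat j) as [C HC].
  exists C. intros t. rewrite <- H0. auto.
Qed.

Lemma rapid_decay_weighted_sq u : rapid_decay u -> exists C, forall t, ((1 + t ^ 2) * u t) ^ 2 <= C.
Proof.
  intros Hu. destruct (Hu 0%nat) as [C0 H0]. destruct (Hu 2%nat) as [C2 H2].
  exists ((C0 + C2) ^ 2). intros t. specialize (H0 t). specialize (H2 t). simpl in H0.
  rewrite <- pow2_abs. apply pow_incr. split; [apply Rabs_pos|].
  rewrite Rabs_mult, Rabs_right by (pose proof (pow2_ge_0 t); lra).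
  rewrite <- (pow2_abs t). lra.
Qed.

Definition vanishes_at_infty (b : R -> R) : Prop :=
  forall eta, 0 < eta -> exists N1, forall N, N1 <= N -> Rabs (b N) <= eta.

Lemma vanishes_plus b1 b2 : vanishes_at_infty b1 -> vanishes_at_infty b2 ->
  vanishes_at_infty (fun N => b1 N + b2 N).
Proof.
  intros H1 H2 eta Heta.
  destruct (H1 (eta / 2) ltac:(lra)) as [N1 HN1]. destruct (H2 (eta / 2) ltac:(lra)) as [N2 HN2].
  exists (Rmax N1 N2). intros N HN.
  pose proof (HN1 N (Rle_trans _ _ _ (Rmax_l N1 N2) HN)).
  pose proof (HN2 N (Rle_trans _ _ _ (Rmax_r N1 N2) HN)).
  pose proof (Rabs_triang (b1 N) (b2 N)). lra.
Qed.

Lemma vanishes_scal c b : vanishes_at_infty b -> vanishes_at_infty (fun N => c * b N).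
Proof.
  intros H eta Heta. destruct (H (eta / (Rabs c + 1))) as [N1 HN1].
  { apply Rdiv_lt_0_compat; pose proof (Rabs_pos c); lra. }
  exists N1. intros N HN. specialize (HN1 N HN). rewrite Rabs_mult.
  pose proof (Rabs_pos c). pose proof (Rabs_pos (b N)).
  apply Rle_trans with ((Rabs c + 1) * (eta / (Rabs c + 1))); [nra|].
  right. field. lra.
Qed.

Lemma vanishes_of_le_inv_sq b C : (forall N, Rabs (b N) * (1 + N ^ 2) <= C) -> vanishes_at_infty b.
Proof.
  intros Hb eta Heta. exists (1 + Rabs C / eta).
  assert (0 <= Rabs C / eta) by
    (unfold Rdiv; apply Rmult_le_pos; [apply Rabs_pos | left; apply Rinv_0_lt_compat; lra]).
  intros N HN. specialize (Hb N).
  assert (HCN : Rabs C <= eta * N) by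
    (apply (Rmult_le_reg_r (/ eta)); [apply Rinv_0_lt_compat; lra|];
     replace (eta * N * / eta) with N by (field; lra); unfold Rdiv in HN; lra).
  pose proof (Rle_abs C). pose proof (Rabs_pos (b N)).
  assert (HN2 : N <= 1 + N ^ 2) by nra.
  destruct (Rle_dec (Rabs (b N)) eta) as [|Hgt]; auto. exfalso.
  assert (eta * (1 + N ^ 2) < Rabs (b N) * (1 + N ^ 2)) by
    (apply Rmult_lt_compat_r; [nra | lra]).
  nra.
Qed.

Lemma boundary_vanishes ur ui g G : rapid_decay ur -> rapid_decay ui ->
  (forall t, Rabs (g t) <= G * (1 + t ^ 2)) -> vanishes_at_infty (boundary ur ui g).
Proof.
  intros Dr Di Hg.
  destruct (rapid_decay_weighted_sq ur Dr) as [Cr HCr].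
  destruct (rapid_decay_weighted_sq ui Di) as [Ci HCi].
  assert (HG : 0 <= G) by (pose proof (Rabs_pos (g 0)); pose proof (Hg 0); nra).
  assert (Hpt : forall t, Rabs (g t * abs2 ur ui t) * (1 + t ^ 2) <= G * (Cr + Ci)).
  { intros t. specialize (HCr t). specialize (HCi t). specialize (Hg t).
    pose proof (abs2_ge0 ur ui t). pose proof (pow2_ge_0 t).
    rewrite Rabs_mult, (Rabs_right (abs2 ur ui t)) by lra.
    apply Rle_trans with (G * (((1 + t ^ 2) * ur t) ^ 2 + ((1 + t ^ 2) * ui t) ^ 2)).
    - unfold abs2 in *. pose proof (Rabs_pos (g t)).
      replace (G * (((1 + t ^ 2) * ur t) ^ 2 + ((1 + t ^ 2) * ui t) ^ 2))
        with (G * (1 + t ^ 2) * (ur t ^ 2 + ui t ^ 2) * (1 + t ^ 2)) by ring.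
      apply Rmult_le_compat_r; [lra|]. apply Rmult_le_compat_r; lra.
    - apply Rmult_le_compat_l; lra. }
  apply (vanishes_of_le_inv_sq _ (/ (4 * PI) * (2 * (G * (Cr + Ci))))).
  intros N. pose proof PI_RGT_0.
  assert (Hc : 0 < / (4 * PI)) by (apply Rinv_0_lt_compat; lra).
  unfold boundary. rewrite Rabs_mult, Rabs_Rabsolu, (Rabs_right (/ (4 * PI))) by lra.
  pose proof (Hpt N). pose proof (Hpt (- N)). replace ((- N) ^ 2) with (N ^ 2) in * by ring.
  pose proof (Rabs_triang (g N * abs2 ur ui N) (- (g (-N) * abs2 ur ui (-N)))).
  rewrite Rabs_Ropp in *. pose proof (pow2_ge_0 N).
  rewrite Rmult_assoc. apply Rmult_le_compat_l; [lra|]. unfold Rminus. nra.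
Qed.

Lemma le_of_vanishing_excess x C b N0 : vanishes_at_infty b ->
  (forall N, N0 <= N -> x <= C + b N) -> x <= C.
Proof.
  intros Hb Hx. apply Rnot_lt_le. intros Hlt.
  destruct (Hb ((x - C) / 2) ltac:(lra)) as [N1 HN1].
  pose proof (Hx (Rmax N0 N1) (Rmax_l N0 N1)).
  pose proof (HN1 (Rmax N0 N1) (Rmax_r N0 N1)).
  pose proof (Rle_abs (b (Rmax N0 N1))). lra.
Qed.

Lemma Rpower_gt0 x y : 0 < Rpower x y.
Proof. apply exp_pos. Qed.

Lemma Rpower_sq x y : Rpower x y ^ 2 = Rpower x (2 * y).
Proof. replace (2 * y) with (y + y) by ring. rewrite Rpower_plus. ring. Qed.

Lemma Rpower_2 x : 0 < x -> Rpower x 2 = x ^ 2.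
Proof. intros. replace 2 with (INR 2) by (simpl; ring). now rewrite Rpower_pow. Qed.

Lemma Rpower_2_le_2 e : 0 <= e <= 1 -> Rpower 2 e <= 2.
Proof. intros. rewrite <- (Rpower_1 2) at 2 by lra. apply Rle_Rpower; lra. Qed.

Lemma Rpower_le_self x e : 1 <= x -> e <= 1 -> Rpower x e <= x.
Proof. intros. rewrite <- (Rpower_1 x) at 2 by lra. apply Rle_Rpower; lra. Qed.

(** * The estimate on a fixed line *)

Definition quad (c0 p k t : R) : R := c0 - 2 * p * t + k ^ 2 * t ^ 2.

Definition gam (sigma : R) : R := 2 * sigma / (2 * sigma + 1).

Lemma gam_spec sigma : 0 < sigma <= 1 ->
  0 < gam sigma /\ 3 * gam sigma <= 2 /\ (2 - 2 * gam sigma) * sigma = gam sigma.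
Proof.
  intros Hs. unfold gam. assert (0 < 2 * sigma + 1) by lra. split; [|split].
  - apply Rdiv_lt_0_compat; lra.
  - apply (Rmult_le_reg_r (2 * sigma + 1)); auto. field_simplify; lra.
  - field. lra.
Qed.

Definition c_atan (a0 : R) : R := 32 * PI + / a0.
Definition c_pow (a0 : R) : R := 8 / a0.
Definition weight_const (a0 : R) : R :=
  3 + 6 * (c_pow a0 + 1) ^ 2 + 11 / a0 ^ 2 + (2 + 6 * (c_pow a0 + 1) ^ 2) * 4 * c_atan a0 ^ 2.

(** A smooth majorant of [weight^2 / 3], in terms of [k = |x1|] and [c = |x2 - t x1|^2]. *)
Definition model_weight (sigma k c : R) : R :=
  1 + Rpower (1 + k ^ 2) (gam sigma) + Rpower (1 + c) (2 * sigma).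

(** [quad c0 p k t] stands for [|x2 - t x1|^2] with [c0 = |x2|^2], [p = x1.x2], [k = |x1|];
    [hcs] is Cauchy-Schwarz for [(|x1|^2 t - x1.x2)^2 = (x1.(x2 - t x1))^2]. *)
Section WeightedEstimate.
Variables (sigma a0 k p c0 : R) (ur ui dur dui m : R -> R).
Hypotheses (hs : 0 < sigma < 1) (ha0 : 0 < a0) (hk : 0 <= k)
  (hq0 : forall t, 0 <= quad c0 p k t)
  (hcs : forall t, (k ^ 2 * t - p) ^ 2 <= k ^ 2 * quad c0 p k t)
  (Hr : forall t, derivable_pt_lim ur t (dur t)) (Hi : forall t, derivable_pt_lim ui t (dui t))
  (Cdr : continuity dur) (Cdi : continuity dui) (Cm : continuity m)
  (hm1 : forall t, 1 <= quad c0 p k t -> a0 * Rpower (quad c0 p k t) sigma <= m t)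
  (hm0 : forall t, quad c0 p k t <= 1 -> a0 * quad c0 p k t <= m t).

Local Notation q := (quad c0 p k).
Local Notation U := (abs2 ur ui).
Local Notation Phi := (abs2_Pu ur ui dur dui m).
Local Notation mass N := (integral U (- N) N).
Local Notation op_mass N := (integral Phi (- N) N).
Local Notation bd := (boundary ur ui).

Let CU := continuity_abs2 ur ui dur dui Hr Hi.
Let CPhi := continuity_abs2_Pu ur ui dur dui m Hr Hi Cdr Cdi Cm.

Lemma continuity_quad : continuity q.
Proof. unfold quad. solve_continuity. Qed.

Lemma mass_ge0 N : 0 <= N -> 0 <= mass N.
Proof. intros. apply integral_ge0; auto; [lra | intros; apply abs2_ge0]. Qed.

Lemma op_mass_ge0 N : 0 <= N -> 0 <= op_mass N.
Proof. intros. apply integral_ge0; auto; [lra | intros; apply abs2_Pu_ge0]. Qed.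

Lemma multiplier_ge0 t : 0 <= m t.
Proof.
  destruct (Rle_dec 1 (q t)) as [H|H].
  - pose proof (hm1 t H). pose proof (Rpower_gt0 (q t) sigma). nra.
  - pose proof (hm0 t ltac:(lra)). pose proof (hq0 t). nra.
Qed.

Lemma multiplier_mass_le N d : 0 <= N -> 0 < d ->
  integral (fun t => m t * U t) (-N) N <= (d * op_mass N + mass N / d) / 2 + bd (fun _ => 1) N.
Proof.
  intros HN Hd.
  pose proof (multiplier_estimate ur ui dur dui m Hr Hi Cdr Cdi Cm (fun _ => 1) (fun _ => 0) N d
                (fun t => derivable_pt_lim_const 1 t) ltac:(solve_continuity) HN Hd) as H.
  cbv beta in H.
  replace (fun t => m t * 1 * U t) with (fun t => m t * U t) in H
    by (apply functional_extensionality; intros; ring).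
  replace (fun t => 0 * U t) with (fun _ : R => 0) in H
    by (apply functional_extensionality; intros; ring).
  replace (fun t => 1 ^ 2 * U t) with U in H by (apply functional_extensionality; intros; ring).
  rewrite integral_const in H. lra.
Qed.

(** ** The multiplier [- atan (mu (t - t0))] *)

Let mu := Rpower k (gam sigma).
Let t0 := p / k ^ 2.
Let psi t := mu / (1 + (mu * (t - t0)) ^ 2).
Let g_atan t := - atan (mu * (t - t0)).

Lemma mu_gt0 : 0 < mu.
Proof. apply Rpower_gt0. Qed.

Lemma derivable_g_atan t : derivable_pt_lim g_atan t (- psi t).
Proof.
  unfold g_atan, psi.
  replace (mu / (1 + (mu * (t - t0)) ^ 2)) with (/ (1 + (mu * (t - t0)) ^ 2) * (mu * (1 - 0)))
    by (unfold Rdiv; ring).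
  apply (derivable_pt_lim_opp (fun t => atan (mu * (t - t0)))).
  apply (derivable_pt_lim_compose (fun t => mu * (t - t0)) atan).
  - apply derivable_pt_lim_cmul, derivable_pt_lim_sub;
      [apply derivable_pt_lim_id | apply derivable_pt_lim_const].
  - apply derivable_pt_lim_atan.
Qed.

Lemma continuity_psi : continuity psi.
Proof.
  intros x. unfold psi, Rdiv. apply continuity_pt_mult; [apply continuity_pt_const; intros ? ?; reflexivity|].
  apply continuity_pt_inv.
  - apply (continuity_plus (fun _ => 1) (fun t => (mu * (t - t0)) ^ 2)); solve_continuity.
  - pose proof (pow2_ge_0 (mu * (x - t0))). lra.
Qed.

Lemma g_atan_bound t : -2 <= g_atan t <= 2.
Proof. unfold g_atan. pose proof (atan_bound (mu * (t - t0))). pose proof PI_4. lra. Qed.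

(** Where [psi < mu / 2], [mu |t - t0| > 1], so [q t >= k^2 (t - t0)^2 > k^(2 - 2 gam)], and
    [hm1]/[hm0] give [m t >= a0 k^gam = a0 mu] since [(2 - 2 gam) sigma = gam]. *)
Lemma mu_le_psi_multiplier t : 1 <= k -> mu <= 2 * psi t + m t / a0.
Proof.
  intros hk1. destruct (gam_spec sigma ltac:(lra)) as [G1 [G2 G3]].
  pose proof mu_gt0. pose proof (multiplier_ge0 t).
  assert (Hma : 0 <= m t / a0) by (apply Rle_mult_inv_pos; lra).
  set (s := mu * (t - t0)). pose proof (pow2_ge_0 s).
  assert (Hpsi0 : 0 <= psi t) by (unfold psi; fold s; apply Rle_mult_inv_pos; lra).
  destruct (Rle_dec (s ^ 2) 1) as [Hle|Hgt].
  - assert (mu / 2 <= psi t).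
    { unfold psi; fold s. apply Rmult_le_compat_l; [lra|]. apply Rinv_le_contravar; lra. }
    lra.
  - assert (Hk2 : 0 < k ^ 2) by nra.
    assert (Hq : k ^ 2 * (t - t0) ^ 2 <= q t).
    { pose proof (hcs t) as Hcs.
      replace (k ^ 2 * t - p) with (k ^ 2 * (t - t0)) in Hcs by (unfold t0; field; lra).
      apply (Rmult_le_reg_l (k ^ 2)); auto. nra. }
    set (e := 2 - 2 * gam sigma).
    assert (He : k ^ 2 = Rpower k e * mu ^ 2).
    { unfold mu. rewrite Rpower_sq, <- Rpower_plus. unfold e.
      replace (2 - 2 * gam sigma + 2 * gam sigma) with 2 by ring. rewrite Rpower_2; lra. }
    pose proof (Rpower_gt0 k e).
    assert (Hqk : Rpower k e < q t).
    { assert (Rpower k e * 1 < Rpower k e * (mu ^ 2 * (t - t0) ^ 2)).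
      { apply Rmult_lt_compat_l; auto. unfold s in Hgt. lra. }
      nra. }
    assert (Hmue : mu <= Rpower k e) by (unfold mu; apply Rle_Rpower; unfold e; lra).
    assert (mu <= m t / a0).
    { apply (Rmult_le_reg_l a0); auto.
      replace (a0 * (m t / a0)) with (m t) by (field; lra).
      destruct (Rle_dec 1 (q t)) as [Hq1|Hq1].
      - pose proof (hm1 t Hq1).
        assert (Hmo : Rpower (Rpower k e) sigma <= Rpower (q t) sigma) by (apply Rle_Rpower_l; lra).
        rewrite Rpower_mult in Hmo. unfold e in Hmo. rewrite G3 in Hmo. fold mu in Hmo. nra.
      - pose proof (hm0 t ltac:(lra)). nra. }
    lra.
Qed.

Lemma psi_mass_le N d : 0 <= N -> 0 < d ->
  / (4 * PI) * integral (fun t => psi t * U t) (-N) N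
  <= 3 * (d * op_mass N + mass N / d) + bd g_atan N + 2 * bd (fun _ => 1) N.
Proof.
  intros HN Hd. pose proof PI_RGT_0. pose proof continuity_psi.
  assert (Cg' : continuity (fun t => - psi t)) by solve_continuity.
  pose proof (multiplier_estimate ur ui dur dui m Hr Hi Cdr Cdi Cm g_atan (fun t => - psi t) N d
                derivable_g_atan Cg' HN Hd) as Hmi.
  cbv beta in Hmi.
  pose proof (multiplier_mass_le N d HN Hd).
  pose proof (continuity_of_derivative _ _ derivable_g_atan) as Cg.
  replace (fun t => - psi t * U t) with (fun t => -1 * (psi t * U t)) in Hmi
    by (apply functional_extensionality; intros; ring).
  rewrite integral_scal in Hmi by (lra || solve_continuity).
  assert (Hlow : -2 * integral (fun t => m t * U t) (-N) N
                 <= integral (fun t => m t * g_atan t * U t) (-N) N).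
  { rewrite <- integral_scal by (lra || solve_continuity).
    apply integral_le; try lra; try solve_continuity.
    intros t _. pose proof (g_atan_bound t). pose proof (multiplier_ge0 t). pose proof (abs2_ge0 ur ui t).
    assert (0 <= m t * U t) by (apply Rmult_le_pos; auto). nra. }
  assert (Hsq : integral (fun t => g_atan t ^ 2 * U t) (-N) N <= 4 * mass N).
  { rewrite <- integral_scal by (lra || solve_continuity).
    apply integral_le; try lra; try solve_continuity.
    intros t _. pose proof (g_atan_bound t). pose proof (abs2_ge0 ur ui t).
    apply Rmult_le_compat_r; [lra | nra]. }
  assert (integral (fun t => g_atan t ^ 2 * U t) (-N) N / d <= 4 * mass N / d)
    by (apply Rmult_le_compat_r; [left; apply Rinv_0_lt_compat|]; lra).
  pose proof (mass_ge0 N HN). pose proof (op_mass_ge0 N HN).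
  assert (0 <= mass N / d) by (apply Rle_mult_inv_pos; lra).
  replace (4 * mass N / d) with (4 * (mass N / d)) in * by (unfold Rdiv; ring).
  assert (0 <= d * op_mass N) by (apply Rmult_le_pos; lra).
  lra.
Qed.

Lemma mu_mass_le N : 1 <= k -> 0 <= N ->
  mu * mass N <= 2 * integral (fun t => psi t * U t) (-N) N + / a0 * integral (fun t => m t * U t) (-N) N.
Proof.
  intros hk1 HN. pose proof continuity_psi.
  rewrite <- !integral_scal, <- integral_plus by (lra || solve_continuity).
  apply integral_le; try lra; try solve_continuity.
  intros t _. pose proof (mu_le_psi_multiplier t hk1). pose proof (abs2_ge0 ur ui t).
  replace (2 * (psi t * U t) + / a0 * (m t * U t)) with ((2 * psi t + m t / a0) * U t) by (unfold Rdiv; ring).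
  apply Rmult_le_compat_r; auto.
Qed.

(** Choosing [d = 2 c_atan / mu] in [psi_mass_le] and [multiplier_mass_le]. *)
Lemma mu2_mass_le N : 1 <= k -> 0 <= N ->
  mu ^ 2 * mass N <= 4 * c_atan a0 ^ 2 * op_mass N
                     + 2 * mu * c_atan a0 * (bd (fun _ => 1) N + bd g_atan N).
Proof.
  intros hk1 HN. pose proof mu_gt0 as Hmu. pose proof PI_RGT_0.
  assert (Hia : 0 < / a0) by (apply Rinv_0_lt_compat; lra).
  assert (Hc1 : c_atan a0 = 32 * PI + / a0) by reflexivity.
  set (d := 2 * c_atan a0 / mu). assert (Hd : 0 < d) by (apply Rdiv_lt_0_compat; lra).
  pose proof (multiplier_mass_le N d HN Hd) as HM1.
  pose proof (psi_mass_le N d HN Hd) as HP.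
  pose proof (mu_mass_le N hk1 HN) as HmuP.
  pose proof (boundary_ge0 ur ui (fun _ => 1) N). pose proof (boundary_ge0 ur ui g_atan N).
  pose proof (mass_ge0 N HN). pose proof (op_mass_ge0 N HN).
  set (c1 := c_atan a0) in *.
  set (X := mass N) in *. set (Y := op_mass N) in *.
  set (b1 := bd (fun _ => 1) N) in *. set (b3 := bd g_atan N) in *.
  set (P := integral (fun t => psi t * U t) (-N) N) in *.
  set (M1 := integral (fun t => m t * U t) (-N) N) in *.
  set (T := d * Y + X / d) in *.
  assert (HT : 0 <= T) by
    (unfold T; apply Rplus_le_le_0_compat; [apply Rmult_le_pos | apply Rle_mult_inv_pos]; lra).
  assert (HP' : P <= 4 * PI * (3 * T + b3 + 2 * b1)).
  { apply (Rmult_le_reg_l (/ (4 * PI))); [apply Rinv_0_lt_compat; lra|].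
    rewrite <- Rmult_assoc, Rinv_l by lra. lra. }
  assert (HmuX : mu * X <= c1 * (T + b1 + b3)).
  { assert (/ a0 * M1 <= / a0 * (T / 2 + b1)) by (apply Rmult_le_compat_l; lra).
    rewrite Hc1. nra. }
  assert (ET : c1 * T = 2 * c1 ^ 2 * Y / mu + mu * X / 2) by (unfold T, d; field; lra).
  assert (Hfin : mu * (mu * X) <= mu * (4 * c1 ^ 2 * Y / mu + 2 * c1 * (b1 + b3)))
    by (apply Rmult_le_compat_l; lra).
  replace (mu * (4 * c1 ^ 2 * Y / mu + 2 * c1 * (b1 + b3)))
    with (4 * c1 ^ 2 * Y + 2 * mu * c1 * (b1 + b3)) in Hfin by (field; lra).
  nra.
Qed.

(** ** The multiplier [(B + q)^sigma] *)

(** [B] is chosen so that [B^(2 sigma + 1) = (c_pow a0 k + 1)^2] dominates [(c_pow a0 k)^2],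
    which makes [|g_pow'| <= a0/4 (B + q)^(2 sigma)] ([abs_g_pow'_le]). *)
Let B := Rpower (c_pow a0 * k + 1) (2 / (2 * sigma + 1)).
Let qB t := B + q t.
Let g_pow t := Rpower (qB t) sigma.
Let g_pow' t := sigma * Rpower (qB t) (sigma - 1) * (2 * (k ^ 2 * t - p)).

Lemma c_pow_gt0 : 0 < c_pow a0.
Proof. apply Rdiv_lt_0_compat; lra. Qed.

Lemma B_ge1 : 1 <= B.
Proof.
  pose proof c_pow_gt0. rewrite <- (Rpower_O (c_pow a0 * k + 1)) by nra.
  apply Rle_Rpower; [nra|]. left; apply Rdiv_lt_0_compat; lra.
Qed.

Lemma B_pow : Rpower B (2 * sigma + 1) = (c_pow a0 * k + 1) ^ 2.
Proof.
  pose proof c_pow_gt0. unfold B. rewrite Rpower_mult.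
  replace (2 / (2 * sigma + 1) * (2 * sigma + 1)) with 2 by (field; lra).
  apply Rpower_2. nra.
Qed.

Lemma qB_ge1 t : 1 <= qB t.
Proof. pose proof B_ge1. pose proof (hq0 t). unfold qB. lra. Qed.

Lemma derivable_qB_pow e t :
  derivable_pt_lim (fun t => Rpower (qB t) e) t (e * Rpower (qB t) (e - 1) * (2 * (k ^ 2 * t - p))).
Proof.
  apply (derivable_pt_lim_compose qB (fun x => Rpower x e)).
  - unfold qB, quad.
    replace (2 * (k ^ 2 * t - p)) with (0 + (0 - 2 * p * 1 + k ^ 2 * (2 * t * 1))) by ring.
    apply derivable_pt_lim_add; [apply derivable_pt_lim_const|].
    apply derivable_pt_lim_add; [apply derivable_pt_lim_sub|].
    + apply derivable_pt_lim_const.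
    + apply derivable_pt_lim_cmul, derivable_pt_lim_id.
    + apply derivable_pt_lim_cmul, derivable_pt_lim_square, derivable_pt_lim_id.
  - apply derivable_pt_lim_power. pose proof (qB_ge1 t). lra.
Qed.

Lemma continuity_qB_pow e : continuity (fun t => Rpower (qB t) e).
Proof. exact (continuity_of_derivative _ _ (derivable_qB_pow e)). Qed.

Lemma abs_g_pow'_le t : Rabs (g_pow' t) <= a0 / 4 * Rpower (qB t) (2 * sigma).
Proof.
  pose proof (qB_ge1 t) as Hs. pose proof c_pow_gt0 as HK. set (Kq := c_pow a0) in *.
  set (Sp := Rpower (qB t) (sigma + 1)). assert (HSp : 0 < Sp) by apply Rpower_gt0.
  assert (Hx : Rabs (k ^ 2 * t - p) <= Sp / Kq).
  { rewrite <- (Rabs_right (Sp / Kq)) by (left; apply Rdiv_lt_0_compat; lra).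
    apply Rsqr_le_abs_0. rewrite !Rsqr_pow2.
    assert (Hqs : k ^ 2 * q t <= k ^ 2 * qB t).
    { apply Rmult_le_compat_l; [apply pow2_ge_0|]. pose proof B_ge1. unfold qB. lra. }
    assert (HB : Kq ^ 2 * k ^ 2 <= Rpower (qB t) (2 * sigma + 1)).
    { apply Rle_trans with (Rpower B (2 * sigma + 1)).
      - rewrite B_pow. fold Kq. nra.
      - apply Rle_Rpower_l; [lra|]. pose proof B_ge1. pose proof (hq0 t). unfold qB. lra. }
    replace ((Sp / Kq) ^ 2) with (Rpower (qB t) (2 * sigma + 1) * qB t / Kq ^ 2).
    2:{ unfold Sp, Rdiv. rewrite Rpow_mult_distr, Rpower_sq, pow_inv.
        replace (2 * (sigma + 1)) with (2 * sigma + 1 + 1) by ring.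
        rewrite !Rpower_plus, !Rpower_1 by lra. ring. }
    apply Rle_trans with (k ^ 2 * qB t); [pose proof (hcs t); lra|].
    apply (Rmult_le_reg_l (Kq ^ 2)); [nra|].
    replace (Kq ^ 2 * (Rpower (qB t) (2 * sigma + 1) * qB t / Kq ^ 2))
      with (Rpower (qB t) (2 * sigma + 1) * qB t) by (field; lra).
    nra. }
  unfold g_pow'. rewrite !Rabs_mult, (Rabs_right sigma), (Rabs_right 2) by lra.
  rewrite (Rabs_right (Rpower (qB t) (sigma - 1))) by (left; apply Rpower_gt0).
  assert (HP : 0 < Rpower (qB t) (sigma - 1)) by apply Rpower_gt0.
  assert (EP : Rpower (qB t) (sigma - 1) * Sp = Rpower (qB t) (2 * sigma)).
  { unfold Sp. rewrite <- Rpower_plus. f_equal. ring. }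
  apply Rle_trans with (sigma * Rpower (qB t) (sigma - 1) * (2 * (Sp / Kq))).
  { apply Rmult_le_compat_l; [nra | lra]. }
  replace (sigma * Rpower (qB t) (sigma - 1) * (2 * (Sp / Kq)))
    with (sigma * (a0 / 4) * Rpower (qB t) (2 * sigma)) by (rewrite <- EP; unfold Kq, c_pow; field; lra).
  pose proof (Rpower_gt0 (qB t) (2 * sigma)).
  apply Rmult_le_compat_r; [lra|]. unfold Rdiv. nra.
Qed.

Lemma qB_pow_le_multiplier t :
  Rpower (qB t) (2 * sigma) <= 2 / a0 * m t * g_pow t + 4 * Rpower B (2 * sigma).
Proof.
  pose proof (qB_ge1 t). pose proof B_ge1. pose proof (multiplier_ge0 t).
  assert (Hg : 0 < g_pow t) by apply Rpower_gt0.
  assert (Hmg : 0 <= 2 / a0 * m t * g_pow t)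
    by (apply Rmult_le_pos; [apply Rmult_le_pos; [apply Rle_mult_inv_pos|]|]; lra).
  pose proof (Rpower_gt0 B (2 * sigma)).
  destruct (Rle_dec B (q t)) as [HBq|HBq].
  - pose proof (hm1 t ltac:(lra)) as Hm1.
    assert (Hsq : g_pow t <= 2 * Rpower (q t) sigma).
    { apply Rle_trans with (Rpower (2 * q t) sigma).
      - apply Rle_Rpower_l; [lra|]. unfold qB. lra.
      - rewrite <- Rpower_mult_distr by lra. apply Rmult_le_compat_r; [left; apply Rpower_gt0|].
        apply Rpower_2_le_2; lra. }
    replace (Rpower (qB t) (2 * sigma)) with (g_pow t * g_pow t)
      by (unfold g_pow; rewrite <- Rpower_plus; f_equal; ring).
    assert (2 * Rpower (q t) sigma <= 2 / a0 * m t).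
    { apply (Rmult_le_reg_l a0); auto. replace (a0 * (2 / a0 * m t)) with (2 * m t) by (field; lra).
      lra. }
    nra.
  - assert (Rpower (qB t) (2 * sigma) <= Rpower 2 (2 * sigma) * Rpower B (2 * sigma)).
    { rewrite Rpower_mult_distr by lra. apply Rle_Rpower_l; [lra|]. unfold qB in *. lra. }
    assert (Rpower 2 (2 * sigma) <= 4).
    { replace 4 with (Rpower 2 2) by (rewrite Rpower_2; lra). apply Rle_Rpower; lra. }
    nra.
Qed.

Lemma derivable_g_pow t : derivable_pt_lim g_pow t (g_pow' t).
Proof. apply derivable_qB_pow. Qed.

Lemma continuity_g_pow' : continuity g_pow'.
Proof. pose proof (continuity_qB_pow (sigma - 1)). unfold g_pow'. solve_continuity. Qed.

Lemma continuity_g_pow : continuity g_pow.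
Proof. apply continuity_qB_pow. Qed.

Local Notation pow_mass N := (integral (fun t => Rpower (qB t) (2 * sigma) * U t) (- N) N).

Lemma g_pow_multiplier_mass_le N : 0 <= N ->
  integral (fun t => m t * g_pow t * U t) (-N) N
  <= 4 * op_mass N / a0 + a0 / 8 * pow_mass N + bd g_pow N.
Proof.
  intros HN. pose proof PI_RGT_0. pose proof (continuity_qB_pow (2 * sigma)).
  pose proof continuity_g_pow' as Cg'. pose proof continuity_g_pow as Cg.
  assert (Hd : 0 < 8 / a0) by (apply Rdiv_lt_0_compat; lra).
  pose proof (multiplier_estimate ur ui dur dui m Hr Hi Cdr Cdi Cm g_pow g_pow' N (8 / a0)
                derivable_g_pow Cg' HN Hd) as Hmi.
  replace (fun t => g_pow t ^ 2 * U t) with (fun t => Rpower (qB t) (2 * sigma) * U t) in Hmi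
    by (apply functional_extensionality; intros; unfold g_pow; now rewrite Rpower_sq).
  assert (HZ : 0 <= pow_mass N).
  { apply integral_ge0; try lra; try solve_continuity.
    intros t _. apply Rmult_le_pos; [left; apply Rpower_gt0 | apply abs2_ge0]. }
  assert (HG : integral (fun t => g_pow' t * U t) (-N) N <= a0 / 4 * pow_mass N).
  { rewrite <- integral_scal by (lra || solve_continuity).
    apply integral_le; try lra; try solve_continuity.
    intros t _. pose proof (abs_g_pow'_le t). pose proof (abs2_ge0 ur ui t).
    pose proof (Rle_abs (g_pow' t)).
    rewrite <- Rmult_assoc. apply Rmult_le_compat_r; lra. }
  assert (HrG : - (a0 / 16 * pow_mass N) <= - / (4 * PI) * integral (fun t => g_pow' t * U t) (-N) N).
  { assert (/ (4 * PI) <= / 4) by (apply Rinv_le_contravar; pose proof PI2_1; lra).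
    assert (0 < / (4 * PI)) by (apply Rinv_0_lt_compat; lra).
    destruct (Rle_dec 0 (integral (fun t => g_pow' t * U t) (-N) N)); [|nra].
    assert (/ (4 * PI) * integral (fun t => g_pow' t * U t) (-N) N
            <= / 4 * (a0 / 4 * pow_mass N)) by (apply Rmult_le_compat; lra).
    lra. }
  replace ((8 / a0 * op_mass N + pow_mass N / (8 / a0)) / 2)
    with (4 * op_mass N / a0 + a0 / 16 * pow_mass N) in Hmi by (field; lra).
  lra.
Qed.

Lemma pow_mass_le_multiplier N : 0 <= N ->
  pow_mass N <= 2 / a0 * integral (fun t => m t * g_pow t * U t) (-N) N
                + 4 * Rpower B (2 * sigma) * mass N.
Proof.
  intros HN. pose proof (continuity_qB_pow (2 * sigma)). pose proof continuity_g_pow.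
  rewrite <- !integral_scal, <- integral_plus by (lra || solve_continuity).
  apply integral_le; try lra; try solve_continuity.
  intros t _. pose proof (qB_pow_le_multiplier t). pose proof (abs2_ge0 ur ui t).
  replace (2 / a0 * (m t * g_pow t * U t) + 4 * Rpower B (2 * sigma) * U t)
    with ((2 / a0 * m t * g_pow t + 4 * Rpower B (2 * sigma)) * U t) by ring.
  apply Rmult_le_compat_r; auto.
Qed.

Lemma pow_mass_le N : 0 <= N ->
  pow_mass N <= 11 * op_mass N / a0 ^ 2 + 6 * Rpower B (2 * sigma) * mass N + 3 * bd g_pow N / a0.
Proof.
  intros HN.
  pose proof (g_pow_multiplier_mass_le N HN) as HMg.
  pose proof (pow_mass_le_multiplier N HN) as HZ.
  pose proof (op_mass_ge0 N HN). pose proof (boundary_ge0 ur ui g_pow N).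
  pose proof (mass_ge0 N HN). pose proof (Rpower_gt0 B (2 * sigma)).
  set (Mg := integral (fun t => m t * g_pow t * U t) (-N) N) in *.
  assert (2 / a0 * Mg <= 2 / a0 * (4 * op_mass N / a0 + a0 / 8 * pow_mass N + bd g_pow N))
    by (apply Rmult_le_compat_l; [apply Rle_mult_inv_pos|]; lra).
  replace (2 / a0 * (4 * op_mass N / a0 + a0 / 8 * pow_mass N + bd g_pow N))
    with (8 * (op_mass N / a0 ^ 2) + pow_mass N / 4 + 2 * (bd g_pow N / a0)) in * by (field; lra).
  replace (11 * op_mass N / a0 ^ 2) with (11 * (op_mass N / a0 ^ 2)) by (unfold Rdiv; ring).
  replace (3 * bd g_pow N / a0) with (3 * (bd g_pow N / a0)) by (unfold Rdiv; ring).
  assert (0 <= op_mass N / a0 ^ 2) by (apply Rle_mult_inv_pos; nra).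
  assert (0 <= bd g_pow N / a0) by (apply Rle_mult_inv_pos; lra).
  assert (0 <= Rpower B (2 * sigma) * mass N) by (apply Rmult_le_pos; lra).
  lra.
Qed.

Let kap := Rpower (1 + k ^ 2) (gam sigma).
Let A := (c_pow a0 + 1) ^ 2.
Let L := (2 + 6 * A) * 2 * mu * c_atan a0 + 3 / a0.
Local Notation W t := (model_weight sigma k (q t)).

Lemma B_pow_2sigma : Rpower B (2 * sigma) = Rpower (c_pow a0 * k + 1) (2 * gam sigma).
Proof. unfold B. rewrite Rpower_mult. f_equal. unfold gam. field. lra. Qed.

Lemma B_pow_le_large_k : 1 <= k -> Rpower B (2 * sigma) <= A * mu ^ 2.
Proof.
  intros hk1. rewrite B_pow_2sigma. pose proof c_pow_gt0. destruct (gam_spec sigma ltac:(lra)) as [G1 [G2 _]].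
  apply Rle_trans with (Rpower ((c_pow a0 + 1) * k) (2 * gam sigma)).
  - apply Rle_Rpower_l; nra.
  - rewrite <- Rpower_mult_distr by nra. unfold mu, A. rewrite Rpower_sq.
    apply Rmult_le_compat_r; [left; apply Rpower_gt0|].
    rewrite <- Rpower_2 by lra. apply Rle_Rpower; lra.
Qed.

Lemma B_pow_le_small_k : k <= 1 -> Rpower B (2 * sigma) <= A.
Proof.
  intros hk1. rewrite B_pow_2sigma. pose proof c_pow_gt0. destruct (gam_spec sigma ltac:(lra)) as [G1 [G2 _]].
  apply Rle_trans with (Rpower (c_pow a0 + 1) (2 * gam sigma)).
  - apply Rle_Rpower_l; nra.
  - unfold A. rewrite <- Rpower_2 by lra. apply Rle_Rpower; lra.
Qed.

Lemma kap_le_large_k : 1 <= k -> kap <= 2 * mu ^ 2.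
Proof.
  intros hk1. destruct (gam_spec sigma ltac:(lra)) as [G1 [G2 _]].
  apply Rle_trans with (Rpower (2 * k ^ 2) (gam sigma)); [apply Rle_Rpower_l; nra|].
  rewrite <- Rpower_mult_distr by nra. unfold mu. rewrite Rpower_sq, <- Rpower_2, Rpower_mult by lra.
  apply Rmult_le_compat_r; [left; apply Rpower_gt0|]. apply Rpower_2_le_2; lra.
Qed.

Lemma kap_le_small_k : k <= 1 -> kap <= 2.
Proof.
  intros hk1. destruct (gam_spec sigma ltac:(lra)) as [G1 [G2 _]].
  apply Rle_trans with (Rpower 2 (gam sigma)); [apply Rle_Rpower_l; nra|].
  apply Rpower_2_le_2; lra.
Qed.

Lemma weight_coeff_mass_le N : 0 <= N ->
  (1 + kap + 6 * Rpower B (2 * sigma)) * mass N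
  <= (3 + 6 * A) * mass N
     + (2 + 6 * A) * (4 * c_atan a0 ^ 2 * op_mass N
                      + 2 * mu * c_atan a0 * (bd (fun _ => 1) N + bd g_atan N)).
Proof.
  intros HN. pose proof (mass_ge0 N HN). pose proof (op_mass_ge0 N HN). pose proof mu_gt0.
  assert (HA : 0 <= A) by apply pow2_ge_0.
  assert (0 <= 4 * c_atan a0 ^ 2 * op_mass N
               + 2 * mu * c_atan a0 * (bd (fun _ => 1) N + bd g_atan N)).
  { pose proof (boundary_ge0 ur ui (fun _ => 1) N). pose proof (boundary_ge0 ur ui g_atan N).
    assert (0 < c_atan a0) by (unfold c_atan; pose proof PI_RGT_0;
      assert (0 < / a0) by (apply Rinv_0_lt_compat; lra); lra).
    apply Rplus_le_le_0_compat; apply Rmult_le_pos; try nra. }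
  destruct (Rle_dec 1 k) as [hk1|hk1].
  - pose proof (mu2_mass_le N hk1 HN). pose proof (kap_le_large_k hk1). pose proof (B_pow_le_large_k hk1).
    assert (kap * mass N <= 2 * (mu ^ 2 * mass N)) by nra.
    assert (Rpower B (2 * sigma) * mass N <= A * (mu ^ 2 * mass N)) by nra.
    assert ((2 + 6 * A) * (mu ^ 2 * mass N)
            <= (2 + 6 * A) * (4 * c_atan a0 ^ 2 * op_mass N
                  + 2 * mu * c_atan a0 * (bd (fun _ => 1) N + bd g_atan N)))
      by (apply Rmult_le_compat_l; lra).
    nra.
  - pose proof (kap_le_small_k ltac:(lra)). pose proof (B_pow_le_small_k ltac:(lra)).
    assert (0 <= (2 + 6 * A) * (4 * c_atan a0 ^ 2 * op_mass N
                  + 2 * mu * c_atan a0 * (bd (fun _ => 1) N + bd g_atan N))) by nra.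
    nra.
Qed.

Lemma continuity_model_weight : continuity (fun t => W t).
Proof.
  intros x. unfold model_weight. pose proof continuity_quad.
  apply (continuity_pt_plus (fun _ => 1 + kap)); [apply continuity_pt_const; intros ? ?; reflexivity|].
  apply (continuity_pt_comp (fun t => 1 + q t) (fun y => Rpower y (2 * sigma))).
  - apply (continuity_plus (fun _ => 1)); solve_continuity.
  - apply derivable_continuous_pt. exists (2 * sigma * Rpower (1 + q x) (2 * sigma - 1)).
    apply derivable_pt_lim_power. pose proof (hq0 x). lra.
Qed.

Lemma model_weight_mass_le_pow N : 0 <= N ->
  integral (fun t => W t * U t) (-N) N <= (1 + kap) * mass N + pow_mass N.
Proof.
  intros HN. pose proof continuity_model_weight. pose proof (continuity_qB_pow (2 * sigma)).
  rewrite <- integral_scal, <- integral_plus by (lra || solve_continuity).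
  apply integral_le; try lra; try solve_continuity.
  intros t _. pose proof (abs2_ge0 ur ui t). unfold model_weight.
  assert (Rpower (1 + q t) (2 * sigma) <= Rpower (qB t) (2 * sigma)).
  { apply Rle_Rpower_l; [lra|]. pose proof (hq0 t). pose proof B_ge1. unfold qB. lra. }
  fold kap. nra.
Qed.

Lemma model_weight_mass_le N : 0 <= N ->
  integral (fun t => W t * U t) (-N) N
  <= weight_const a0 * (op_mass N + mass N) + L * (bd (fun _ => 1) N + bd g_pow N + bd g_atan N).
Proof.
  intros HN.
  pose proof (model_weight_mass_le_pow N HN). pose proof (pow_mass_le N HN).
  pose proof (weight_coeff_mass_le N HN).
  pose proof (mass_ge0 N HN). pose proof (op_mass_ge0 N HN). pose proof mu_gt0.
  pose proof (boundary_ge0 ur ui (fun _ => 1) N). pose proof (boundary_ge0 ur ui g_pow N).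
  pose proof (boundary_ge0 ur ui g_atan N).
  assert (HA : 0 <= A) by apply pow2_ge_0.
  assert (0 < c_atan a0) by (unfold c_atan; pose proof PI_RGT_0;
    assert (0 < / a0) by (apply Rinv_0_lt_compat; lra); lra).
  set (X := mass N) in *. set (Y := op_mass N) in *. set (c1 := c_atan a0) in *.
  set (b1 := bd (fun _ => 1) N) in *. set (b2 := bd g_pow N) in *. set (b3 := bd g_atan N) in *.
  assert (Hia2 : 0 < / a0 ^ 2) by (apply Rinv_0_lt_compat; nra).
  assert (E1 : weight_const a0 * (Y + X)
              = (3 + 6 * A) * X + 11 * (Y * / a0 ^ 2) + (2 + 6 * A) * 4 * c1 ^ 2 * Y
                + ((3 + 6 * A) * Y + 11 * (X * / a0 ^ 2) + (2 + 6 * A) * 4 * c1 ^ 2 * X))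
    by (unfold weight_const, A, c1; field; lra).
  assert (E2 : L * (b1 + b2 + b3)
              = (2 + 6 * A) * 2 * mu * c1 * (b1 + b3) + 3 * (b2 * / a0)
                + ((2 + 6 * A) * 2 * mu * c1 * b2 + 3 / a0 * (b1 + b3)))
    by (unfold L, c1; field; lra).
  assert (HAc : 0 <= (2 + 6 * A) * 4 * c1 ^ 2) by (pose proof (pow2_ge_0 c1); nra).
  assert (HAmu : 0 <= (2 + 6 * A) * 2 * mu * c1) by
    (apply Rmult_le_pos; [apply Rmult_le_pos|]; nra).
  assert (0 <= (3 + 6 * A) * Y + 11 * (X * / a0 ^ 2) + (2 + 6 * A) * 4 * c1 ^ 2 * X).
  { assert (0 <= X * / a0 ^ 2) by (apply Rmult_le_pos; lra).
    assert (0 <= (3 + 6 * A) * Y) by (apply Rmult_le_pos; lra).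
    assert (0 <= (2 + 6 * A) * 4 * c1 ^ 2 * X) by (apply Rmult_le_pos; lra). lra. }
  assert (0 <= (2 + 6 * A) * 2 * mu * c1 * b2 + 3 / a0 * (b1 + b3)).
  { assert (0 <= (2 + 6 * A) * 2 * mu * c1 * b2) by (apply Rmult_le_pos; lra).
    assert (0 <= 3 / a0 * (b1 + b3)) by (apply Rmult_le_pos; [apply Rle_mult_inv_pos|]; lra).
    lra. }
  unfold Rdiv in *. lra.
Qed.

Lemma g_pow_growth t : Rabs (g_pow t) <= (B + Rabs c0 + Rabs p + k ^ 2) * (1 + t ^ 2).
Proof.
  pose proof (qB_ge1 t). unfold g_pow.
  rewrite Rabs_right by (left; apply Rpower_gt0).
  apply Rle_trans with (qB t); [apply Rpower_le_self; lra|].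
  unfold qB, quad. pose proof B_ge1.
  pose proof (Rle_abs c0). pose proof (Rabs_pos c0). pose proof (Rabs_pos p).
  pose proof (pow2_ge_0 k). pose proof (pow2_ge_0 t).
  assert (- (2 * p * t) <= Rabs p * (1 + t ^ 2)).
  { assert (- (2 * p * t) <= 2 * Rabs p * Rabs t).
    { replace (2 * Rabs p * Rabs t) with (Rabs (- (2 * p * t)))
        by (rewrite Rabs_Ropp, !Rabs_mult, (Rabs_right 2) by lra; ring).
      apply Rle_abs. }
    assert (2 * Rabs t <= 1 + t ^ 2) by
      (rewrite <- (pow2_abs t); pose proof (pow2_ge_0 (Rabs t - 1)); nra).
    nra. }
  nra.
Qed.

Lemma model_weight_mass_bounded YB XU : rapid_decay ur -> rapid_decay ui ->
  (forall N, 0 <= N -> op_mass N <= YB) -> (forall N, 0 <= N -> mass N <= XU) ->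
  forall N0, 0 <= N0 -> integral (fun t => W t * U t) (-N0) N0 <= weight_const a0 * (YB + XU).
Proof.
  intros Dr Di HYB HXU N0 HN0.
  assert (HK : 0 <= weight_const a0).
  { unfold weight_const. pose proof (pow2_ge_0 (c_pow a0 + 1)). pose proof (pow2_ge_0 (c_atan a0)).
    assert (0 <= 11 / a0 ^ 2) by (apply Rle_mult_inv_pos; nra). nra. }
  apply (le_of_vanishing_excess _ _ (fun N => L * (bd (fun _ => 1) N + bd g_pow N + bd g_atan N)) N0).
  - apply vanishes_scal. repeat apply vanishes_plus.
    + apply (boundary_vanishes ur ui _ 1 Dr Di).
      intros t. rewrite Rabs_R1. pose proof (pow2_ge_0 t). lra.
    + exact (boundary_vanishes ur ui _ _ Dr Di g_pow_growth).
    + apply (boundary_vanishes ur ui _ 2 Dr Di).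
      intros t. pose proof (g_atan_bound t). pose proof (pow2_ge_0 t). apply Rabs_le. nra.
  - intros N HN.
    apply Rle_trans with (integral (fun t => W t * U t) (-N) N).
    { apply integral_sym_mono; auto.
      - pose proof continuity_model_weight. solve_continuity.
      - intros t. apply Rmult_le_pos; [|apply abs2_ge0]. unfold model_weight.
        pose proof (Rpower_gt0 (1 + k ^ 2) (gam sigma)). pose proof (Rpower_gt0 (1 + q t) (2 * sigma)).
        lra. }
    pose proof (model_weight_mass_le N ltac:(lra)).
    pose proof (HYB N ltac:(lra)). pose proof (HXU N ltac:(lra)).
    assert (weight_const a0 * (op_mass N + mass N) <= weight_const a0 * (YB + XU))
      by (apply Rmult_le_compat_l; lra).
    lra.
Qed.

End WeightedEstimate.

(** * Reduction to a fixed line *)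

Lemma fsum_ext n (f g : Fin.t n -> R) : (forall i, f i = g i) -> fsum n f = fsum n g.
Proof.
  revert f g; induction n; intros f g H; simpl; auto.
  now rewrite H, (IHn (fun i => f (Fin.FS i)) (fun i => g (Fin.FS i))).
Qed.

Lemma fsum_plus n (f g : Fin.t n -> R) : fsum n (fun i => f i + g i) = fsum n f + fsum n g.
Proof. revert f g; induction n; intros f g; simpl; [ring|]. rewrite IHn. ring. Qed.

Lemma fsum_scal n c (f : Fin.t n -> R) : fsum n (fun i => c * f i) = c * fsum n f.
Proof. revert f; induction n; intros f; simpl; [ring|]. rewrite IHn. ring. Qed.

Lemma fsum_ge0 n (f : Fin.t n -> R) : (forall i, 0 <= f i) -> 0 <= fsum n f.
Proof.
  revert f; induction n; intros f H; simpl; [lra|].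
  pose proof (H Fin.F1). pose proof (IHn (fun i => f (Fin.FS i)) (fun i => H _)). lra.
Qed.

Lemma fsum_ge_term n (f : Fin.t n -> R) : (forall i, 0 <= f i) -> forall i, f i <= fsum n f.
Proof.
  revert f; induction n; intros f H i; [inversion i|].
  simpl. apply (Fin.caseS' i (fun i => f i <= f Fin.F1 + fsum n (fun i => f (Fin.FS i)))).
  - pose proof (fsum_ge0 n (fun i => f (Fin.FS i)) (fun i => H _)). lra.
  - intros j. pose proof (H Fin.F1). pose proof (IHn (fun i => f (Fin.FS i)) (fun i => H _) j). lra.
Qed.

Definition vdot {n} (x y : vec n) : R := fsum n (fun i => x i * y i).

Lemma vnorm_sq n (x : vec n) : vnorm x ^ 2 = fsum n (fun i => x i ^ 2).
Proof.
  unfold vnorm. rewrite <- Rsqr_pow2. apply Rsqr_sqrt.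
  apply fsum_ge0. intros; apply pow2_ge_0.
Qed.

Lemma vnorm_ge0 n (x : vec n) : 0 <= vnorm x.
Proof. apply sqrt_pos. Qed.

Lemma abs_coord_le_vnorm n (x : vec n) i : Rabs (x i) <= vnorm x.
Proof.
  rewrite <- (Rabs_right (vnorm x)) by (apply Rle_ge, vnorm_ge0).
  apply Rsqr_le_abs_0. rewrite !Rsqr_pow2, vnorm_sq.
  apply (fsum_ge_term n (fun i => x i ^ 2)). intros; apply pow2_ge_0.
Qed.

Lemma vdot_sq_le n (x y : vec n) : vdot x y ^ 2 <= vnorm x ^ 2 * vnorm y ^ 2.
Proof.
  rewrite !vnorm_sq. unfold vdot.
  set (A := fsum n (fun i => x i ^ 2)). set (S := fsum n (fun i => x i * y i)).
  set (Bv := fsum n (fun i => y i ^ 2)).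
  assert (Hq : forall l, 0 <= l ^ 2 * A - 2 * l * S + Bv).
  { intros l. replace (l ^ 2 * A - 2 * l * S + Bv) with (fsum n (fun i => (l * x i - y i) ^ 2)).
    - apply fsum_ge0. intros; apply pow2_ge_0.
    - unfold A, S, Bv.
      rewrite (fsum_ext n _ (fun i => (l ^ 2 * x i ^ 2 + (-2 * l) * (x i * y i)) + y i ^ 2))
        by (intros; ring).
      rewrite !fsum_plus, !fsum_scal. ring. }
  assert (HA : 0 <= A) by (apply fsum_ge0; intros; apply pow2_ge_0).
  assert (HB : 0 <= Bv) by (apply fsum_ge0; intros; apply pow2_ge_0).
  destruct (Rle_lt_or_eq_dec 0 A HA) as [HA'|<-].
  - pose proof (Hq (S / A)) as H.
    replace ((S / A) ^ 2 * A - 2 * (S / A) * S + Bv) with (Bv - S ^ 2 / A) in H by (field; lra).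
    apply (Rmult_le_reg_r (/ A)); [apply Rinv_0_lt_compat; lra|].
    replace (A * Bv * / A) with Bv by (field; lra). unfold Rdiv in H. lra.
  - destruct (Req_dec S 0) as [->|HS]; [lra|].
    pose proof (Hq ((Bv + 1) / (2 * S))) as H.
    replace (((Bv + 1) / (2 * S)) ^ 2 * 0 - 2 * ((Bv + 1) / (2 * S)) * S + Bv) with (-1) in H
      by (field; auto).
    lra.
Qed.

Lemma vnorm_sub_scal_sq n (x1 x2 : vec n) t :
  vnorm (vsub x2 (vscal t x1)) ^ 2 = quad (vnorm x2 ^ 2) (vdot x1 x2) (vnorm x1) t.
Proof.
  unfold quad. rewrite !vnorm_sq. unfold vdot, vsub, vscal.
  rewrite (fsum_ext n _ (fun i => (x2 i ^ 2 + (-2 * t) * (x1 i * x2 i)) + t ^ 2 * x1 i ^ 2))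
    by (intros; ring).
  rewrite !fsum_plus, !fsum_scal. ring.
Qed.

Lemma quad_line_ge0 n (x1 x2 : vec n) t : 0 <= quad (vnorm x2 ^ 2) (vdot x1 x2) (vnorm x1) t.
Proof. rewrite <- vnorm_sub_scal_sq. apply pow2_ge_0. Qed.

Lemma quad_line_deriv_sq_le n (x1 x2 : vec n) t :
  (vnorm x1 ^ 2 * t - vdot x1 x2) ^ 2
  <= vnorm x1 ^ 2 * quad (vnorm x2 ^ 2) (vdot x1 x2) (vnorm x1) t.
Proof.
  rewrite <- vnorm_sub_scal_sq.
  replace (vnorm x1 ^ 2 * t - vdot x1 x2) with (- vdot x1 (vsub x2 (vscal t x1))).
  - rewrite <- Rsqr_pow2, <- Rsqr_neg, Rsqr_pow2. apply vdot_sq_le.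
  - rewrite vnorm_sq. unfold vdot, vsub, vscal.
    rewrite (fsum_ext n (fun i => x1 i * (x2 i - t * x1 i)) (fun i => x1 i * x2 i + (- t) * x1 i ^ 2))
      by (intros; ring).
    rewrite fsum_plus, fsum_scal. ring.
Qed.

Lemma continuity_pt_intro f x :
  (forall eps, 0 < eps -> exists d, 0 < d /\ forall y, Rabs (y - x) < d -> Rabs (f y - f x) < eps) ->
  continuity_pt f x.
Proof.
  intros H eps Heps. destruct (H eps Heps) as [d [Hd Hy]].
  exists d. split; auto. intros y [_ Hyd]. apply Hy, Hyd.
Qed.

Lemma continuity_of_lipschitz f Lc : (forall x y, Rabs (f x - f y) <= Lc * Rabs (x - y)) -> continuity f.
Proof.
  intros H x. apply continuity_pt_intro. intros eps Heps.
  assert (HL : 0 <= Lc).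
  { pose proof (H 1 0). pose proof (Rabs_pos (f 1 - f 0)). rewrite Rminus_0_r, Rabs_R1 in *. lra. }
  exists (eps / (Lc + 1)). split; [apply Rdiv_lt_0_compat; lra|].
  intros y Hy. apply Rle_lt_trans with (Lc * Rabs (y - x)); [apply H|].
  apply Rle_lt_trans with ((Lc + 1) * Rabs (y - x)); [pose proof (Rabs_pos (y - x)); nra|].
  apply (Rmult_lt_compat_l (Lc + 1)) in Hy; [|lra].
  replace ((Lc + 1) * (eps / (Lc + 1))) with eps in Hy by (field; lra). lra.
Qed.

Lemma continuity_rpow e : 0 < e -> continuity (fun x => rpow x e).
Proof.
  intros He x0. destruct (Rle_dec x0 0) as [H0|H0].
  - apply continuity_pt_intro. intros eps Heps.
    exists (Rpower eps (/ e)). split; [apply Rpower_gt0|].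
    intros y Hy. unfold rpow. destruct (Rle_dec x0 0) as [_|]; [|lra]. rewrite Rminus_0_r.
    destruct (Rle_dec y 0) as [Hy0|Hy0]; [rewrite Rabs_R0; auto|].
    rewrite Rabs_right by (left; apply Rpower_gt0).
    assert (Hy' : y < Rpower eps (/ e)) by (rewrite Rabs_right in Hy; lra).
    apply Rlt_le_trans with (Rpower (Rpower eps (/ e)) e); [apply Rlt_Rpower_l; lra|].
    rewrite Rpower_mult, Rinv_l, Rpower_1 by lra. lra.
  - apply (continuity_pt_locally_ext (fun x => Rpower x e) _ x0); [lra| |].
    + intros x Hx. unfold rpow, Rdist in *. destruct (Rle_dec x 0); auto.
      exfalso. rewrite Rabs_left1 in Hx; lra.
    + apply derivable_continuous_pt. exists (e * Rpower x0 (e - 1)).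
      apply derivable_pt_lim_power. lra.
Qed.

Lemma continuity_along_line n (w : vec n -> R) (x1 x2 : vec n) :
  continuous_vec w -> continuity (fun t => w (vsub x2 (vscal t x1))).
Proof.
  intros hw t. apply continuity_pt_intro. intros eps Heps.
  destruct (hw (vsub x2 (vscal t x1)) eps Heps) as [d [Hd H]].
  pose proof (vnorm_ge0 n x1).
  exists (d / (vnorm x1 + 1)). split; [apply Rdiv_lt_0_compat; lra|].
  intros t' Ht'. apply H. intros i. unfold vsub, vscal.
  replace (x2 i - t' * x1 i - (x2 i - t * x1 i)) with (- ((t' - t) * x1 i)) by ring.
  rewrite Rabs_Ropp, Rabs_mult. pose proof (abs_coord_le_vnorm n x1 i).
  pose proof (Rabs_pos (t' - t)).
  apply (Rmult_lt_compat_l (vnorm x1 + 1)) in Ht'; [|lra].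
  replace ((vnorm x1 + 1) * (d / (vnorm x1 + 1))) with d in Ht' by (field; lra).
  assert (Rabs (t' - t) * Rabs (x1 i) <= Rabs (t' - t) * vnorm x1) by (apply Rmult_le_compat_l; auto).
  nra.
Qed.

Lemma continuity_vnorm_along_line n (x1 x2 : vec n) : continuity (fun t => vnorm (vsub x2 (vscal t x1))).
Proof.
  intros t.
  apply (continuity_pt_locally_ext (fun t => sqrt (quad (vnorm x2 ^ 2) (vdot x1 x2) (vnorm x1) t))
           _ 1 t ltac:(lra)).
  - intros y _. rewrite <- vnorm_sub_scal_sq, sqrt_pow2; auto. apply vnorm_ge0.
  - apply (continuity_pt_comp (quad (vnorm x2 ^ 2) (vdot x1 x2) (vnorm x1)) sqrt).
    + unfold quad. solve_continuity.
    + apply continuity_pt_sqrt, quad_line_ge0.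
Qed.

Lemma move3_0 n (pt : R * vec n * vec n) d : move3 pt d 0 = pt.
Proof.
  destruct pt as [[t xi] eta]. destruct d as [[i|i]|]; simpl;
    repeat f_equal; try ring; apply functional_extensionality; intros j;
    unfold vshift; destruct Fin.eq_dec; ring.
Qed.

Lemma move3_add n (pt : R * vec n * vec n) d s0 s : move3 (move3 pt d s0) d s = move3 pt d (s0 + s).
Proof.
  destruct pt as [[t xi] eta]. destruct d as [[i|i]|]; simpl.
  - do 2 f_equal. apply functional_extensionality; intros j; unfold vshift; destruct Fin.eq_dec; ring.
  - f_equal. apply functional_extensionality; intros j; unfold vshift; destruct Fin.eq_dec; ring.
  - now rewrite Rplus_assoc.
Qed.

Section PartialDerivatives.
Variables (n : nat) (f : R * vec n * vec n -> R)
  (D : list (option (Fin.t n + Fin.t n)) -> R * vec n * vec n -> R).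
Hypothesis hD : partial_family (@move3 n) f D.

Lemma lipschitz_of_partial_bound d M : (forall pt, Rabs (D (d :: nil) pt) <= M) ->
  forall pt s, Rabs (f (move3 pt d s) - f pt) <= M * Rabs s.
Proof.
  intros HM pt s. destruct hD as [H0 H1].
  assert (Hphi : forall s0, derivable_pt_lim (fun s => f (move3 pt d s)) s0 (D (d :: nil) (move3 pt d s0))).
  { intros s0 eps Heps. destruct (H1 nil d (move3 pt d s0) eps Heps) as [del Hdel].
    exists del. intros h Hh0 Hh. specialize (Hdel h Hh0 Hh).
    rewrite !H0, !move3_add, Rplus_0_r, Rplus_0_l in Hdel. exact Hdel. }
  destruct (MVT_abs (fun s => f (move3 pt d s)) (fun s0 => D (d :: nil) (move3 pt d s0)) 0 s)
    as [c [Hc _]]; [intros; apply Hphi|].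
  rewrite move3_0, Rminus_0_r in Hc. rewrite Hc.
  apply Rmult_le_compat_r; [apply Rabs_pos | apply HM].
Qed.

Definition vmix (j : nat) (eta eta' : vec n) : vec n :=
  fun i => if Nat.ltb (proj1_sig (Fin.to_nat i)) j then eta' i else eta i.

Lemma vmix_0 eta eta' : vmix 0 eta eta' = eta.
Proof.
  apply functional_extensionality. intros i. unfold vmix.
  destruct (Nat.ltb_spec (proj1_sig (Fin.to_nat i)) 0); auto; lia.
Qed.

Lemma vmix_n eta eta' : vmix n eta eta' = eta'.
Proof.
  apply functional_extensionality. intros i. unfold vmix.
  destruct (Fin.to_nat i) as [x Hx]. simpl. destruct (Nat.ltb_spec x n); auto; lia.
Qed.

Lemma vmix_S j (Hj : (j < n)%nat) eta eta' :
  vmix (S j) eta eta' =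
  vshift (vmix j eta eta') (Fin.of_nat_lt Hj) (eta' (Fin.of_nat_lt Hj) - eta (Fin.of_nat_lt Hj)).
Proof.
  apply functional_extensionality. intros i. unfold vshift, vmix.
  destruct (Fin.eq_dec (Fin.of_nat_lt Hj) i) as [<-|E].
  - rewrite Fin.to_nat_of_nat. simpl.
    destruct (Nat.ltb_spec j (S j)); [|lia]. destruct (Nat.ltb_spec j j); [lia|]. ring.
  - assert (proj1_sig (Fin.to_nat i) <> j).
    { intros Hi. apply E, Fin.to_nat_inj. now rewrite Fin.to_nat_of_nat. }
    destruct (Nat.ltb_spec (proj1_sig (Fin.to_nat i)) (S j));
      destruct (Nat.ltb_spec (proj1_sig (Fin.to_nat i)) j); auto; lia.
Qed.

Lemma lipschitz_last_block M (HM : forall i pt, Rabs (D (Some (inr i) :: nil) pt) <= M)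
  t xi (eta eta' : vec n) dl (Hdl : forall i, Rabs (eta' i - eta i) <= dl) :
  Rabs (f (t, xi, eta') - f (t, xi, eta)) <= INR n * M * dl.
Proof.
  rewrite <- (vmix_n eta eta').
  assert (Hj : forall j, (j <= n)%nat ->
    Rabs (f (t, xi, vmix j eta eta') - f (t, xi, eta)) <= INR j * M * dl);
    [|apply Hj; lia].
  induction j as [|j IH]; intros Hjn.
  - rewrite vmix_0, Rminus_diag, Rabs_R0. simpl. lra.
  - assert (Hj : (j < n)%nat) by lia. rewrite (vmix_S j Hj).
    set (i := Fin.of_nat_lt Hj).
    pose proof (lipschitz_of_partial_bound (Some (inr i)) M (HM i) (t, xi, vmix j eta eta') (eta' i - eta i))
      as Hstep. simpl move3 in Hstep.
    pose proof (IH ltac:(lia)).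
    assert (0 <= M) by
      (pose proof (HM i (t, xi, eta)); pose proof (Rabs_pos (D (Some (inr i) :: nil) (t, xi, eta))); lra).
    assert (M * Rabs (eta' i - eta i) <= M * dl) by (apply Rmult_le_compat_l; auto).
    pose proof (Rdist_tri (f (t, xi, vshift (vmix j eta eta') i (eta' i - eta i))) (f (t, xi, eta))
                          (f (t, xi, vmix j eta eta'))).
    unfold Rdist in *. rewrite S_INR. lra.
Qed.

End PartialDerivatives.

Lemma exists_uniform_bound n (P : Fin.t n -> R -> Prop) :
  (forall i M M', P i M -> M <= M' -> P i M') -> (forall i, exists M, P i M) -> exists M, forall i, P i M.
Proof.
  revert P. induction n; intros P Hmono H; [exists 0; intros i; inversion i|].
  destruct (IHn (fun i => P (Fin.FS i))) as [M1 HM1]; [intros; eapply Hmono; eauto | intros; apply H|].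
  destruct (H Fin.F1) as [M0 HM0].
  exists (Rmax M0 M1). intros i.
  apply (Fin.caseS' i (fun i => P i (Rmax M0 M1))).
  - eapply Hmono; eauto. apply Rmax_l.
  - intros j. eapply Hmono; eauto. apply Rmax_r.
Qed.

(** The bounded first partials make [a] Lipschitz in [t] and in [eta]. *)
Lemma continuity_a_along_line n (a : R -> vec n -> vec n -> R) (xi1 xi2 : vec n) :
  Cb_inf3 a -> continuity (fun t => a t xi2 (vadd xi1 (vscal t xi2))).
Proof.
  intros [D [hD hB]].
  set (f := fun pt : R * vec n * vec n => match pt with (t, xi, eta) => a t xi eta end) in hD.
  destruct (hB (None :: nil)) as [M0 HM0].
  destruct (exists_uniform_bound n (fun i M => forall pt, Rabs (D (Some (inr i) :: nil) pt) <= M))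
    as [Me HMe]; [intros i M M' H HMM pt; eapply Rle_trans; eauto | intros i; apply hB|].
  apply (continuity_of_lipschitz _ (M0 + INR n * Me * vnorm xi2)).
  intros t' t.
  set (e' := vadd xi1 (vscal t' xi2)). set (e := vadd xi1 (vscal t xi2)).
  pose proof (lipschitz_of_partial_bound n f D hD None M0 HM0 (t, xi2, e') (t' - t)) as Ht.
  simpl move3 in Ht. replace (t + (t' - t)) with t' in Ht by ring.
  pose proof (lipschitz_last_block n f D hD Me HMe t xi2 e e' (vnorm xi2 * Rabs (t' - t))) as He.
  simpl in Ht, He.
  assert (Rabs (a t xi2 e' - a t xi2 e) <= INR n * Me * (vnorm xi2 * Rabs (t' - t))).
  { apply He. intros j. unfold e, e', vadd, vscal.
    replace (xi1 j + t' * xi2 j - (xi1 j + t * xi2 j)) with ((t' - t) * xi2 j) by ring.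
    rewrite Rabs_mult, Rmult_comm. apply Rmult_le_compat_r; [apply Rabs_pos | apply abs_coord_le_vnorm]. }
  pose proof (Rdist_tri (a t' xi2 e') (a t xi2 e) (a t xi2 e')). unfold Rdist in *.
  lra.
Qed.

Lemma continuity_multiplier n sigma (a : R -> vec n -> vec n -> R) (w : vec n -> R) (x1 x2 xi1 xi2 : vec n) :
  0 < sigma -> Cb_inf3 a -> smooth_vec w -> continuity (mult sigma a w x1 x2 xi1 xi2).
Proof.
  intros hs ha [D [[H0 _] HC]]. unfold mult, Ffun.
  assert (Hw : continuous_vec w) by
    (replace w with (D nil) by (apply functional_extensionality; auto); apply HC).
  pose proof (continuity_a_along_line n a xi1 xi2 ha).
  pose proof (continuity_along_line n w x1 x2 Hw).
  pose proof (continuity_vnorm_along_line n x1 x2).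
  assert (continuity (fun t => rpow (vnorm (vsub x2 (vscal t x1))) (2 * sigma))).
  { apply (continuity_comp (fun t => vnorm (vsub x2 (vscal t x1))) (fun r => rpow r (2 * sigma))); auto.
    apply continuity_rpow; lra. }
  solve_continuity.
Qed.

Lemma continuity_schwartz_derivative u du : schwartz u ->
  (forall t, derivable_pt_lim u t (du t)) -> continuity du.
Proof.
  intros [D [H0 [HD _]]] Hu.
  replace du with (D 1%nat); [exact (continuity_of_derivative _ _ (HD 1%nat))|].
  apply functional_extensionality. intros t. apply (uniqueness_limite u t); auto.
  replace u with (D 0%nat) by (apply functional_extensionality; auto). apply HD.
Qed.

Lemma Ffun_ge0 n sigma (w : vec n -> R) y : (forall x, 0 <= w x <= 1) -> 0 <= Ffun sigma w y.
Proof.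
  intros hw01. unfold Ffun, rpow. pose proof (hw01 y). pose proof (pow2_ge_0 (vnorm y)).
  destruct Rle_dec; [nra|]. pose proof (Rpower_gt0 (vnorm y) (2 * sigma)). nra.
Qed.

Lemma Ffun_small n sigma (w : vec n -> R) y : (forall x, vnorm x <= 1 -> w x = 0) ->
  vnorm y ^ 2 <= 1 -> Ffun sigma w y = vnorm y ^ 2.
Proof.
  intros hw0 H. pose proof (vnorm_ge0 n y).
  unfold Ffun. rewrite hw0 by nra. ring.
Qed.

Lemma Ffun_large n sigma (w : vec n -> R) y : 0 < sigma < 1 -> (forall x, 0 <= w x <= 1) ->
  1 <= vnorm y ^ 2 -> Rpower (vnorm y ^ 2) sigma <= Ffun sigma w y.
Proof.
  intros hs hw01 H. pose proof (vnorm_ge0 n y).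
  assert (Hv1 : 1 <= vnorm y) by nra.
  unfold Ffun, rpow. destruct (Rle_dec (vnorm y) 0); [lra|].
  replace (Rpower (vnorm y) (2 * sigma)) with (Rpower (vnorm y ^ 2) sigma)
    by (rewrite <- Rpower_2, Rpower_mult by lra; reflexivity).
  pose proof (Rpower_le_self (vnorm y ^ 2) sigma H ltac:(lra)). pose proof (hw01 y). nra.
Qed.

Section MultiplierLowerBounds.
Variables (n : nat) (sigma a0 : R) (a : R -> vec n -> vec n -> R) (w : vec n -> R) (x1 x2 xi1 xi2 : vec n).
Hypotheses (hsigma : 0 < sigma < 1) (ha0 : 0 < a0) (hapos : forall t xi eta, a0 <= a t xi eta)
  (hw01 : forall x, 0 <= w x <= 1) (hw0 : forall x, vnorm x <= 1 -> w x = 0).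

Local Notation q := (quad (vnorm x2 ^ 2) (vdot x1 x2) (vnorm x1)).

Lemma mult_ge_Ffun t : a0 * Ffun sigma w (vsub x2 (vscal t x1)) <= mult sigma a w x1 x2 xi1 xi2 t.
Proof.
  unfold mult. pose proof (Ffun_ge0 n sigma w (vsub x2 (vscal t x1)) hw01).
  pose proof (hapos t xi2 (vadd xi1 (vscal t xi2))). nra.
Qed.

Lemma mult_ge_quad_large t : 1 <= q t -> a0 * Rpower (q t) sigma <= mult sigma a w x1 x2 xi1 xi2 t.
Proof.
  intros Ht. rewrite <- vnorm_sub_scal_sq in *.
  apply Rle_trans with (a0 * Ffun sigma w (vsub x2 (vscal t x1))); [|apply mult_ge_Ffun].
  apply Rmult_le_compat_l; [lra | apply Ffun_large; auto].
Qed.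

Lemma mult_ge_quad_small t : q t <= 1 -> a0 * q t <= mult sigma a w x1 x2 xi1 xi2 t.
Proof.
  intros Ht. rewrite <- vnorm_sub_scal_sq in *.
  rewrite <- (Ffun_small n sigma w _ hw0 Ht). apply mult_ge_Ffun.
Qed.

End MultiplierLowerBounds.

Section ImproperIntegral.
Variables (g : R -> R) (I : R).
Hypotheses (hI : int_R g I) (Cg : continuity g).

Lemma int_R_ge_partial N : 0 <= N -> integral g (-N) N <= I.
Proof.
  intros HN. apply (proj1 hI). exists N. split; auto.
  exists (continuity_integrable g (-N) N Cg ltac:(lra)). symmetry. apply integral_RiemannInt.
Qed.

Lemma int_R_le_dominated h J : continuity h -> (forall t, g t <= h t) ->
  (forall N, 0 <= N -> integral h (-N) N <= J) -> I <= J.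
Proof.
  intros Ch Hgh HJ. apply (proj2 hI). intros y [N [HN [pr <-]]].
  apply Rle_trans with (integral h (-N) N); [|auto].
  rewrite (integral_RiemannInt h (-N) N (continuity_integrable h (-N) N Ch ltac:(lra))).
  apply RiemannInt_P19; [lra | auto].
Qed.

Lemma int_R_ge0 : 0 <= I.
Proof. rewrite <- (integral_point g (-0)). replace (-0) with 0 at 2 by ring. apply int_R_ge_partial; lra. Qed.

End ImproperIntegral.

Lemma Rpower_sqrt_sq z e : 0 < z -> Rpower (sqrt z) e ^ 2 = Rpower z e.
Proof.
  intros Hz. rewrite Rpower_sq, <- Rpower_sqrt, Rpower_mult by auto. f_equal. field.
Qed.

Lemma weight_sq_le_model_weight n sigma (x1 x2 : vec n) t :
  weight sigma x1 x2 t ^ 2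
  <= 3 * model_weight sigma (vnorm x1) (quad (vnorm x2 ^ 2) (vdot x1 x2) (vnorm x1) t).
Proof.
  rewrite <- vnorm_sub_scal_sq. unfold weight, model_weight, jbr, gam.
  pose proof (pow2_ge_0 (vnorm x1)). pose proof (pow2_ge_0 (vnorm (vsub x2 (vscal t x1)))).
  rewrite <- (Rpower_sqrt_sq (1 + vnorm x1 ^ 2)),
    <- (Rpower_sqrt_sq (1 + vnorm (vsub x2 (vscal t x1)) ^ 2)) by lra.
  set (A1 := Rpower (sqrt (1 + vnorm x1 ^ 2)) (2 * sigma / (2 * sigma + 1))).
  set (A2 := Rpower (sqrt (1 + vnorm (vsub x2 (vscal t x1)) ^ 2)) (2 * sigma)).
  pose proof (pow2_ge_0 (1 - A1)). pose proof (pow2_ge_0 (1 - A2)). pose proof (pow2_ge_0 (A1 - A2)).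
  nra.
Qed.

Lemma sqrt_le_sqrt_mul_add x K y z : 0 <= K -> 0 <= y -> 0 <= z -> x <= K * (y + z) ->
  sqrt x <= sqrt K * (sqrt y + sqrt z).
Proof.
  intros HK Hy Hz Hx.
  apply Rle_trans with (sqrt (K * (y + z))); [now apply sqrt_le_1_alt|].
  rewrite sqrt_mult by lra. apply Rmult_le_compat_l; [apply sqrt_pos|].
  pose proof (sqrt_pos y). pose proof (sqrt_pos z).
  rewrite <- (sqrt_pow2 (sqrt y + sqrt z)) by lra. apply sqrt_le_1_alt.
  replace ((sqrt y + sqrt z) ^ 2) with (sqrt y ^ 2 + sqrt z ^ 2 + 2 * sqrt y * sqrt z) by ring.
  rewrite !pow2_sqrt by auto. nra.
Qed.

Lemma weight_const_gt0 a0 : 0 < a0 -> 0 < weight_const a0.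
Proof.
  intros ha0. unfold weight_const.
  pose proof (pow2_ge_0 (c_pow a0 + 1)). pose proof (pow2_ge_0 (c_atan a0)).
  assert (0 <= 11 / a0 ^ 2) by (apply Rle_mult_inv_pos; nra). nra.
Qed.

Theorem lemma1 (n : nat) (hn : (1 <= n)%nat) (sigma : R) (hsigma : 0 < sigma < 1)
  (a : R -> vec n -> vec n -> R) (ha : Cb_inf3 a) (a0 : R) (ha0 : 0 < a0)
  (hapos : forall t xi eta, a0 <= a t xi eta)
  (w : vec n -> R) (hw : smooth_vec w) (hw01 : forall x, 0 <= w x <= 1)
  (hw1 : forall x, 2 <= vnorm x -> w x = 1) (hw0 : forall x, vnorm x <= 1 -> w x = 0) :
  exists C, 0 < C /\
    forall (ur ui dur dui : R -> R),
      schwartz ur -> schwartz ui ->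
      (forall t, derivable_pt_lim ur t (dur t)) ->
      (forall t, derivable_pt_lim ui t (dui t)) ->
      forall (x1 x2 xi1 xi2 : vec n) (IA IB IU : R),
        int_R (fun t => (weight sigma x1 x2 t) ^ 2 * (ur t ^ 2 + ui t ^ 2)) IA ->
        int_R (fun t => (dur t / (2 * PI) + mult sigma a w x1 x2 xi1 xi2 t * ur t) ^ 2
                      + (dui t / (2 * PI) + mult sigma a w x1 x2 xi1 xi2 t * ui t) ^ 2) IB ->
        int_R (fun t => ur t ^ 2 + ui t ^ 2) IU ->
        sqrt IA <= C * (sqrt IB + sqrt IU).
Proof.
  pose proof (weight_const_gt0 a0 ha0).
  exists (sqrt (3 * weight_const a0)). split; [apply sqrt_lt_R0; lra|].
  intros ur ui dur dui Sr Si Hr Hi x1 x2 xi1 xi2 IA IB IU HA HB HU.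
  pose proof (continuity_multiplier n sigma a w x1 x2 xi1 xi2 ltac:(lra) ha hw) as Cm.
  pose proof (continuity_schwartz_derivative ur dur Sr Hr) as Cdr.
  pose proof (continuity_schwartz_derivative ui dui Si Hi) as Cdi.
  pose proof (continuity_abs2_Pu ur ui dur dui _ Hr Hi Cdr Cdi Cm) as CPhi.
  pose proof (continuity_abs2 ur ui dur dui Hr Hi) as CU.
  pose proof (model_weight_mass_bounded sigma a0 (vnorm x1) (vdot x1 x2) (vnorm x2 ^ 2) ur ui dur dui
    _ hsigma ha0 (vnorm_ge0 n x1) (quad_line_ge0 n x1 x2) (quad_line_deriv_sq_le n x1 x2) Hr Hi Cdr Cdi Cm
    (mult_ge_quad_large n sigma a0 a w x1 x2 xi1 xi2 hsigma ha0 hapos hw01)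
    (mult_ge_quad_small n sigma a0 a w x1 x2 xi1 xi2 hapos hw01 hw0)
    IB IU (schwartz_rapid_decay ur Sr) (schwartz_rapid_decay ui Si)
    (int_R_ge_partial _ IB HB CPhi) (int_R_ge_partial _ IU HU CU)) as Hmass.
  apply sqrt_le_sqrt_mul_add; [lra | exact (int_R_ge0 _ _ HB CPhi) | exact (int_R_ge0 _ _ HU CU)|].
  pose proof (continuity_model_weight sigma _ _ _ (quad_line_ge0 n x1 x2)) as CW.
  apply (int_R_le_dominated _ _ HA (fun t => 3 * (model_weight sigma (vnorm x1)
                                       (quad (vnorm x2 ^ 2) (vdot x1 x2) (vnorm x1) t) * abs2 ur ui t))).
  - solve_continuity.
  - intros t. pose proof (weight_sq_le_model_weight n sigma x1 x2 t).
    pose proof (abs2_ge0 ur ui t). unfold abs2 in *. nra.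
  - intros N HN. rewrite integral_scal by (lra || solve_continuity). pose proof (Hmass N HN). lra.
Qed.
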